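(* Let $n\ge 2$, let $(a_{rq})_{1\le r,q\le n}$ be a real (not necessarily symmetric) matrix, and let $f:\mathbb{R}^n\to\mathbb{R}$, $f(x_1,\dots,x_n)=\sum_{r,q=1}^n a_{rq}\,x_r x_q^2$. Let $M=\mathrm{graph}(f)\subset\mathbb{R}^{n+1}$ with the induced metric $g$, and let $g(t)$, $t\in[0,T)$, be a smooth family of metrics on a neighborhood of $p$ (the origin) in $M$ solving the Ricci flow $\partial_t g=-2\,\mathrm{Ric}(g)$ with $g(0)=g$. Then $Rm(0,p)=0$, and in the global coordinates $x$ the time derivatives $\partial_t R_{ijkl}(0,p)$, for $i<j$, $k<l$, $i\le k$, are: (i) $0$ if $i,j,k,l$ are mutually distinct; (ii) $8(a_{il}a_{lj}+a_{li}a_{ij})-8a_{ij}a_{lj}$ if $i<k=j<l$; (iii) $8a_{ij}a_{kj}-8(a_{ik}a_{kj}+a_{ki}a_{ij})$ if $i<k<l=j$; (iv) $8a_{li}a_{ji}-8(a_{jl}a_{li}+a_{lj}a_{ji})$ if $i=k$, $j\ne l$; (v) $8(a_{ij}^2+a_{ji}^2)-8\big(\sum_{q\ne i,j}a_{qi}a_{qj}+3a_{ii}a_{ij}+3a_{jj}a_{ji}\big)$ if $i=k$, $j=l$. (All other components are determined from these by the symmetries of the curvature tensor.) In particular, if $a_{\alpha\beta}a_{\beta\gamma}+a_{\beta\alpha}a_{\alpha\gamma}=a_{\alpha\gamma}a_{\beta\gamma}$ for all mutually distinct $\alpha,\beta,\gamma$, then $\partial_t R_{ijkl}(0,p)=0$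 whenever $\{i,j\}\neq\{k,l\}$. *)

(* A point of space-time is encoded as
   y : nat -> R with y 0 = t (time) and y 1, ..., y n = x_1, ..., x_n.
   Coordinates of index > n are irrelevant (continuity below forces all
   functions considered to be independent of them). *)
From Stdlib Require Import Reals Lra List Arith ClassicalEpsilon.
Open Scope R_scope.

Definition sum1 (n : nat) (F : nat -> R) : R :=
  fold_right Rplus 0 (map F (seq 1 n)).

Definition kdelta (i j : nat) : R := if Nat.eqb i j then 1 else 0.

Definition origin : nat -> R := fun _ => 0.

Definition upd (y : nat -> R) (m : nat) (v : R) : nat -> R :=
  fun k => if Nat.eqb k m then v else y k.

(* l is the partial derivative of F in coordinate m at y, relative to the
   domain U (one-sided where U is one-sided, e.g. at t = 0). *)
Definition has_pd (U : (nat -> R) -> Prop) (F : (nat -> R) -> R) (m : nat)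
  (y : nat -> R) (l : R) : Prop :=
  forall eps, 0 < eps -> exists delta, 0 < delta /\
    forall h, h <> 0 -> Rabs h < delta -> U (upd y m (y m + h)) ->
      Rabs ((F (upd y m (y m + h)) - F y) / h - l) < eps.

Definition pd (U : (nat -> R) -> Prop) (m : nat) (F : (nat -> R) -> R)
  (y : nat -> R) : R :=
  epsilon (inhabits 0) (has_pd U F m y).

Definition iter_pd (U : (nat -> R) -> Prop) (s : list nat) (F : (nat -> R) -> R)
  : (nat -> R) -> R :=
  fold_right (fun m G => pd U m G) F s.

Definition cont_on (n : nat) (U : (nat -> R) -> Prop) (F : (nat -> R) -> R) : Prop :=
  forall y, U y -> forall eps, 0 < eps -> exists delta, 0 < delta /\
    forall z, U z -> (forall k, (k <= n)%nat -> Rabs (z k - y k) < delta) ->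
      Rabs (F z - F y) < eps.

Definition smooth_on (n : nat) (U : (nat -> R) -> Prop) (F : (nat -> R) -> R) : Prop :=
  forall s : list nat, (forall m, In m s -> (m <= n)%nat) ->
    cont_on n U (iter_pd U s F) /\
    forall m, (m <= n)%nat -> forall y, U y -> exists l, has_pd U (iter_pd U s F) m y l.

Definition open_nbhd0 (n : nat) (V : (nat -> R) -> Prop) : Prop :=
  V origin /\
  (forall y z, (forall k, (1 <= k <= n)%nat -> y k = z k) -> V y -> V z) /\
  (forall y, V y -> exists r, 0 < r /\
     forall z, (forall k, (1 <= k <= n)%nat -> Rabs (z k - y k) < r) -> V z).

Definition domain (T : R) (V : (nat -> R) -> Prop) : (nat -> R) -> Prop :=
  fun y => 0 <= y 0%nat < T /\ V y.

Definition fcubic (n : nat) (a : nat -> nat -> R) (y : nat -> R) : R :=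
  sum1 n (fun r => sum1 n (fun q => a r q * y r * (y q) ^ 2)).

Definition graph_metric (n : nat) (a : nat -> nat -> R) (y : nat -> R) (i j : nat) : R :=
  kdelta i j + pd (fun _ => True) i (fcubic n a) y * pd (fun _ => True) j (fcubic n a) y.

Section Curv.
Variables (n : nat) (U : (nat -> R) -> Prop)
  (g ginv : (nat -> R) -> nat -> nat -> R).

Definition Gamma (y : nat -> R) (i j k : nat) : R :=
  / 2 * sum1 n (fun l => ginv y k l *
     (pd U i (fun z => g z j l) y + pd U j (fun z => g z i l) y
      - pd U l (fun z => g z i j) y)).

(* R(d_i,d_j) d_k = Rup i j k m d_m, with R(X,Y) = [nabla_X, nabla_Y] - nabla_[X,Y] *)
Definition Rup (y : nat -> R) (i j k m : nat) : R :=
  pd U i (fun z => Gamma z j k m) y - pd U j (fun z => Gamma z i k m) y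
  + sum1 n (fun p => Gamma y j k p * Gamma y i p m - Gamma y i k p * Gamma y j p m).

(* R_ijkl = g(R(d_i,d_j)d_k, d_l)   (so R_ijji is a sectional curvature) *)
Definition Rm (y : nat -> R) (i j k l : nat) : R :=
  sum1 n (fun m => Rup y i j k m * g y m l).

Definition Ric (y : nat -> R) (j k : nat) : R :=
  sum1 n (fun i => Rup y i j k i).

End Curv.

Definition ricci_flow (n : nat) (U : (nat -> R) -> Prop)
  (g ginv : (nat -> R) -> nat -> nat -> R) : Prop :=
  (forall i j, (1 <= i <= n)%nat -> (1 <= j <= n)%nat ->
     smooth_on n U (fun y => g y i j)) /\
  (forall y, U y -> forall i j, (1 <= i <= n)%nat -> (1 <= j <= n)%nat ->
     g y i j = g y j i) /\
  (forall y, U y -> forall v : nat -> R,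
     (exists k, (1 <= k <= n)%nat /\ v k <> 0) ->
     0 < sum1 n (fun i => sum1 n (fun j => g y i j * v i * v j))) /\
  (forall y, U y -> forall i k, (1 <= i <= n)%nat -> (1 <= k <= n)%nat ->
     sum1 n (fun j => g y i j * ginv y j k) = kdelta i k /\
     sum1 n (fun j => ginv y i j * g y j k) = kdelta i k) /\
  (forall y, U y -> forall i j, (1 <= i <= n)%nat -> (1 <= j <= n)%nat ->
     has_pd U (fun z => g z i j) 0%nat y (-2 * Ric n U g ginv y i j)).

From Stdlib Require Import Reals Lra Lia List Arith ClassicalEpsilon FunctionalExtensionality PropExtensionality.
Open Scope R_scope.

(* At t = 0 the metric is g = delta + (grad f)(grad f)^T with grad f homogeneous
   quadratic, so g - delta vanishes to fourth order at the origin: the Christoffel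
   symbols vanish to third order there and Rm(0,p) = 0.  Differentiating
   R_ijkl = g(R(d_i,d_j)d_k, d_l) in t at p, every term that is at least quadratic in
   the Christoffel symbols drops out.  Exchanging d_t with the spatial derivatives
   (Schwarz) and using d_t g = -2 Ric reduces what is left to second spatial
   derivatives of Ric at p, which only see the part of Ric linear in the second
   derivatives of g, i.e. fourth derivatives of g at p; these are sums of products of
   the constant third derivatives of f, and the five cases are a finite computation in
   the coefficients a_rq. *)

Fixpoint sum_list (l : list nat) (F : nat -> R) : R :=
  match l with nil => 0 | x :: l' => F x + sum_list l' F end.

Lemma sum1_sum_list n F : sum1 n F = sum_list (seq 1 n) F.
Proof. unfold sum1. induction (seq 1 n); simpl; auto. rewrite IHl; auto. Qed.

Lemma sum_list_ext l F G : (forall x, In x l -> F x = G x) -> sum_list l F = sum_list l G.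
Proof. induction l; simpl; intros H; auto. rewrite H by auto. rewrite IHl; auto. Qed.

Lemma sum_list_plus l F G : sum_list l (fun x => F x + G x) = sum_list l F + sum_list l G.
Proof. induction l; simpl; [ring|]. rewrite IHl; ring. Qed.

Lemma sum_list_minus l F G : sum_list l (fun x => F x - G x) = sum_list l F - sum_list l G.
Proof. induction l; simpl; [ring|]. rewrite IHl; ring. Qed.

Lemma sum_list_scal l c F : sum_list l (fun x => c * F x) = c * sum_list l F.
Proof. induction l; simpl; [ring|]. rewrite IHl; ring. Qed.

Lemma sum_list_scalr l c F : sum_list l (fun x => F x * c) = sum_list l F * c.
Proof. induction l; simpl; [ring|]. rewrite IHl; ring. Qed.

Lemma sum_list_zero l : sum_list l (fun _ => 0) = 0.
Proof. induction l; simpl; [ring|]. rewrite IHl; ring. Qed.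

Lemma sum_list_swap l1 l2 F :
  sum_list l1 (fun x => sum_list l2 (fun y => F x y)) = sum_list l2 (fun y => sum_list l1 (fun x => F x y)).
Proof.
  induction l1; simpl.
  - rewrite sum_list_zero; auto.
  - rewrite IHl1. rewrite <- sum_list_plus. reflexivity.
Qed.

Lemma kdelta_sym i j : kdelta i j = kdelta j i.
Proof. unfold kdelta. destruct (Nat.eqb_spec i j), (Nat.eqb_spec j i); auto; lia. Qed.

Lemma kdelta_eq i : kdelta i i = 1.
Proof. unfold kdelta. rewrite Nat.eqb_refl. auto. Qed.

Lemma kdelta_neq i j : i <> j -> kdelta i j = 0.
Proof. intro H. unfold kdelta. destruct (Nat.eqb_spec i j); auto; lia. Qed.

Lemma sum_list_kdelta l x F : NoDup l -> In x l -> sum_list l (fun i => kdelta i x * F i) = F x.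
Proof.
  induction l; simpl; intros Hnd Hin; [contradiction|].
  inversion Hnd; subst.
  destruct Hin as [<-|Hin].
  - rewrite kdelta_eq. rewrite (sum_list_ext l _ (fun _ => 0)). rewrite sum_list_zero. ring.
    intros y Hy. rewrite kdelta_neq. ring. intros ->. auto.
  - rewrite IHl by auto. rewrite kdelta_neq. ring. intros ->. auto.
Qed.

Lemma sum1_ext n F G : (forall x, (1 <= x <= n)%nat -> F x = G x) -> sum1 n F = sum1 n G.
Proof. intros H. rewrite !sum1_sum_list. apply sum_list_ext. intros x Hx. apply in_seq in Hx. apply H. lia. Qed.

Lemma sum1_plus n F G : sum1 n (fun x => F x + G x) = sum1 n F + sum1 n G.
Proof. rewrite !sum1_sum_list. apply sum_list_plus. Qed.
Lemma sum1_minus n F G : sum1 n (fun x => F x - G x) = sum1 n F - sum1 n G.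
Proof. rewrite !sum1_sum_list. apply sum_list_minus. Qed.
Lemma sum1_scal n c F : sum1 n (fun x => c * F x) = c * sum1 n F.
Proof. rewrite !sum1_sum_list. apply sum_list_scal. Qed.
Lemma sum1_scalr n c F : sum1 n (fun x => F x * c) = sum1 n F * c.
Proof. rewrite !sum1_sum_list. apply sum_list_scalr. Qed.
Lemma sum1_zero n : sum1 n (fun _ => 0) = 0.
Proof. rewrite !sum1_sum_list. apply sum_list_zero. Qed.
Lemma sum1_swap n F :
  sum1 n (fun x => sum1 n (fun y => F x y)) = sum1 n (fun y => sum1 n (fun x => F x y)).
Proof. rewrite !sum1_sum_list.
  rewrite (sum_list_ext _ _ (fun x => sum_list (seq 1 n) (fun y => F x y))) by (intros; apply sum1_sum_list).
  rewrite (sum_list_ext _ (fun y => sum1 n _) (fun y => sum_list (seq 1 n) (fun x => F x y))) by (intros; apply sum1_sum_list).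
  apply sum_list_swap. Qed.
Lemma sum1_kdelta n x F : (1 <= x <= n)%nat -> sum1 n (fun i => kdelta i x * F i) = F x.
Proof. intros H. rewrite sum1_sum_list. apply sum_list_kdelta. apply seq_NoDup. apply in_seq. lia. Qed.
Lemma sum1_kdelta_l n x F : (1 <= x <= n)%nat -> sum1 n (fun i => kdelta x i * F i) = F x.
Proof. intros H. rewrite <- (sum1_kdelta n x F H). apply sum1_ext. intros. rewrite kdelta_sym. auto. Qed.

Lemma sum_list_abs l F : Rabs (sum_list l F) <= sum_list l (fun x => Rabs (F x)).
Proof.
  induction l; simpl. rewrite Rabs_R0; lra.
  eapply Rle_trans. apply Rabs_triang. lra.
Qed.
Lemma sum_list_le l F G : (forall x, In x l -> F x <= G x) -> sum_list l F <= sum_list l G.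
Proof. induction l; simpl; intros H. lra. pose proof (H a (or_introl eq_refl)).
  assert (sum_list l F <= sum_list l G) by (apply IHl; auto). lra. Qed.
Lemma sum1_abs n F : Rabs (sum1 n F) <= sum1 n (fun x => Rabs (F x)).
Proof. rewrite !sum1_sum_list. apply sum_list_abs. Qed.
Lemma sum1_le n F G : (forall x, (1 <= x <= n)%nat -> F x <= G x) -> sum1 n F <= sum1 n G.
Proof. intros H. rewrite !sum1_sum_list. apply sum_list_le. intros x Hx. apply in_seq in Hx. apply H. lia. Qed.
Lemma sum1_const n c : sum1 n (fun _ => c) = INR n * c.
Proof. unfold sum1. generalize 1%nat. induction n; intros s; simpl. ring.
  rewrite IHn. destruct n; simpl; ring. Qed.

Lemma Rabs_kdelta i k : Rabs (kdelta i k) = kdelta k i * 1.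
Proof. unfold kdelta. destruct (Nat.eqb_spec i k), (Nat.eqb_spec k i); try lia; rewrite ?Rabs_R1, ?Rabs_R0; ring. Qed.

Lemma sum_list_ge_term l F k : (forall x, 0 <= F x) -> In k l -> F k <= sum_list l F.
Proof.
  intros HF. induction l; simpl; intros Hin. contradiction.
  destruct Hin as [->|Hin].
  - assert (0 <= sum_list l F). { pose proof (sum_list_le l (fun _ => 0) F). rewrite sum_list_zero in H. apply H. auto. }
    lra.
  - pose proof (HF a). pose proof (IHl Hin). lra.
Qed.

Lemma sum1_ge_term n F k : (forall x, 0 <= F x) -> (1 <= k <= n)%nat -> F k <= sum1 n F.
Proof. intros HF Hk. rewrite sum1_sum_list. apply sum_list_ge_term; auto. apply in_seq. lia. Qed.

Lemma upd_same y m : upd y m (y m) = y.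
Proof. apply functional_extensionality. intro k. unfold upd. destruct (Nat.eqb_spec k m); subst; auto. Qed.
Lemma upd_upd y m a b : upd (upd y m a) m b = upd y m b.
Proof. apply functional_extensionality. intro k. unfold upd. destruct (Nat.eqb_spec k m); auto. Qed.
Lemma upd_at y m v : upd y m v m = v.
Proof. unfold upd. rewrite Nat.eqb_refl. auto. Qed.
Lemma upd_other y m v k : k <> m -> upd y m v k = y k.
Proof. intros H. unfold upd. destruct (Nat.eqb_spec k m); auto; lia. Qed.

Definition lim (D : R -> Prop) (phi : R -> R) (L : R) : Prop :=
  forall eps, 0 < eps -> exists delta, 0 < delta /\
    forall h, h <> 0 -> Rabs h < delta -> D h -> Rabs (phi h - L) < eps.

Lemma lim_const D c : lim D (fun _ => c) c.
Proof. intros e He. exists 1. split. lra. intros. rewrite Rminus_diag, Rabs_R0. auto. Qed.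

Lemma lim_id D : lim D (fun h => h) 0.
Proof. intros e He. exists e. split; auto. intros h _ Hh _. rewrite Rminus_0_r. auto. Qed.

Lemma lim_ext D f g L : (exists d0, 0 < d0 /\ forall h, h <> 0 -> Rabs h < d0 -> D h -> f h = g h) ->
  lim D f L -> lim D g L.
Proof.
  intros [d0 [Hd0 Hfg]] Hf e He. destruct (Hf e He) as [d [Hd H]].
  exists (Rmin d d0). split. apply Rmin_pos; auto.
  intros h Hh Hhd Dh. rewrite <- Hfg; auto.
  apply H; auto. eapply Rlt_le_trans; [exact Hhd| apply Rmin_l].
  eapply Rlt_le_trans; [exact Hhd| apply Rmin_r].
Qed.

Lemma lim_plus D f g L M : lim D f L -> lim D g M -> lim D (fun h => f h + g h) (L + M).
Proof.
  intros Hf Hg e He.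
  destruct (Hf (e/2)) as [d1 [Hd1 H1]]. lra.
  destruct (Hg (e/2)) as [d2 [Hd2 H2]]. lra.
  exists (Rmin d1 d2). split. apply Rmin_pos; auto.
  intros h Hh Hhd Dh.
  specialize (H1 h Hh (Rlt_le_trans _ _ _ Hhd (Rmin_l _ _)) Dh).
  specialize (H2 h Hh (Rlt_le_trans _ _ _ Hhd (Rmin_r _ _)) Dh).
  replace (f h + g h - (L + M)) with ((f h - L) + (g h - M)) by ring.
  eapply Rle_lt_trans. apply Rabs_triang. lra.
Qed.

Lemma lim_scal D f c L : lim D f L -> lim D (fun h => c * f h) (c * L).
Proof.
  intros Hf e He.
  destruct (Hf (e / (Rabs c + 1))) as [d [Hd H]].
  apply Rdiv_lt_0_compat; auto. pose proof (Rabs_pos c); lra.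
  exists d. split; auto. intros h Hh Hhd Dh. specialize (H h Hh Hhd Dh).
  replace (c * f h - c * L) with (c * (f h - L)) by ring. rewrite Rabs_mult.
  pose proof (Rabs_pos c). pose proof (Rabs_pos (f h - L)).
  assert (Rabs (f h - L) * (Rabs c + 1) < e).
  { apply (Rmult_lt_compat_r (Rabs c + 1)) in H. 2: lra.
    unfold Rdiv in H. rewrite Rmult_assoc, Rinv_l in H by lra. lra. }
  nra.
Qed.

Lemma lim_opp D f L : lim D f L -> lim D (fun h => - f h) (- L).
Proof. intros H. replace (-L) with (-1 * L) by ring.
  eapply lim_ext; [|apply lim_scal; exact H]. exists 1. split. lra. intros; ring. Qed.

Lemma lim_minus D f g L M : lim D f L -> lim D g M -> lim D (fun h => f h - g h) (L - M).
Proof. intros Hf Hg. apply lim_plus; auto. apply lim_opp; auto. Qed.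

Lemma lim_mult D f g L M : lim D f L -> lim D g M -> lim D (fun h => f h * g h) (L * M).
Proof.
  intros Hf Hg e He.
  set (K := 1 + Rabs L + Rabs M).
  assert (HK : 1 <= K) by (unfold K; pose proof (Rabs_pos L); pose proof (Rabs_pos M); lra).
  set (e1 := Rmin 1 (e / K)).
  assert (He1 : 0 < e1). { apply Rmin_pos. lra. apply Rdiv_lt_0_compat; lra. }
  assert (He1K : e1 * K <= e).
  { assert (e1 <= e / K) by apply Rmin_r. apply (Rmult_le_compat_r K) in H; [|lra].
    unfold Rdiv in H. rewrite Rmult_assoc, Rinv_l in H by lra. lra. }
  assert (He11 : e1 <= 1) by apply Rmin_l.
  destruct (Hf e1 He1) as [d1 [Hd1 H1]].
  destruct (Hg e1 He1) as [d2 [Hd2 H2]].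
  exists (Rmin d1 d2). split. apply Rmin_pos; auto.
  intros h Hh Hhd Dh.
  specialize (H1 h Hh (Rlt_le_trans _ _ _ Hhd (Rmin_l _ _)) Dh).
  specialize (H2 h Hh (Rlt_le_trans _ _ _ Hhd (Rmin_r _ _)) Dh).
  replace (f h * g h - L * M) with ((f h - L) * (g h - M) + (f h - L) * M + L * (g h - M)) by ring.
  eapply Rle_lt_trans. apply Rabs_triang.
  eapply Rle_lt_trans. apply Rplus_le_compat_r. apply Rabs_triang.
  rewrite !Rabs_mult.
  pose proof (Rabs_pos (f h - L)). pose proof (Rabs_pos (g h - M)).
  pose proof (Rabs_pos L). pose proof (Rabs_pos M).
  assert (Rabs (f h - L) * Rabs (g h - M) <= e1 * e1) by (apply Rmult_le_compat; lra).
  assert (Rabs (f h - L) * Rabs M <= e1 * Rabs M) by (apply Rmult_le_compat_r; lra).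
  assert (Rabs L * Rabs (g h - M) <= Rabs L * e1) by (apply Rmult_le_compat_l; lra).
  assert (e1 * e1 <= e1 * 1) by (apply Rmult_le_compat_l; lra).
  assert (Rabs (f h - L) * Rabs M < e1 * Rabs M \/ Rabs M = 0).
  { destruct (Req_dec (Rabs M) 0); auto. left. apply Rmult_lt_compat_r; auto. lra. }
  unfold K in He1K. nra.
Qed.

Lemma lim_sumL D l (F : nat -> R -> R) (L : nat -> R) :
  (forall i, In i l -> lim D (F i) (L i)) ->
  lim D (fun h => sum_list l (fun i => F i h)) (sum_list l L).
Proof.
  induction l; simpl; intros H.
  - apply lim_const.
  - apply lim_plus; auto.
Qed.

Lemma lim_sum1 D n (F : nat -> R -> R) (L : nat -> R) :
  (forall i, (1 <= i <= n)%nat -> lim D (F i) (L i)) ->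
  lim D (fun h => sum1 n (fun i => F i h)) (sum1 n L).
Proof. intros H. rewrite sum1_sum_list. eapply lim_ext; [|apply lim_sumL]. exists 1; split; [lra|]; intros; rewrite sum1_sum_list; auto. intros i Hi. apply in_seq in Hi. apply H. lia. Qed.

Definition nonzero_near0 (D : R -> Prop) : Prop :=
  forall d, 0 < d -> exists h, h <> 0 /\ Rabs h < d /\ D h.

Lemma lim_unique D f L M : nonzero_near0 D -> lim D f L -> lim D f M -> L = M.
Proof.
  intros Ha Hf Hg. destruct (Req_dec L M) as [|Hne]; auto. exfalso.
  set (e := Rabs (L - M) / 2).
  assert (He : 0 < e). { unfold e. apply Rdiv_lt_0_compat; [|lra]. apply Rabs_pos_lt. lra. }
  destruct (Hf e He) as [d1 [Hd1 H1]]. destruct (Hg e He) as [d2 [Hd2 H2]].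
  destruct (Ha (Rmin d1 d2)) as [h [Hh [Hhd Dh]]]. apply Rmin_pos; auto.
  specialize (H1 h Hh (Rlt_le_trans _ _ _ Hhd (Rmin_l _ _)) Dh).
  specialize (H2 h Hh (Rlt_le_trans _ _ _ Hhd (Rmin_r _ _)) Dh).
  assert (Rabs (L - M) <= Rabs (f h - M) + Rabs (f h - L)).
  { replace (L - M) with ((f h - M) - (f h - L)) by ring.
    eapply Rle_trans. apply Rabs_triang. rewrite Rabs_Ropp. lra. }
  unfold e in *. lra.
Qed.

Lemma lim_mult_zero D f g : lim D f 0 -> (exists d0 K, 0 < d0 /\ forall h, h <> 0 -> Rabs h < d0 -> D h -> Rabs (g h) <= K) ->
  lim D (fun h => f h * g h) 0.
Proof.
  intros Hf [d0 [K [Hd0 HK]]] e He.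
  set (K' := Rabs K + 1).
  destruct (Hf (e / K')) as [d [Hd H]]. apply Rdiv_lt_0_compat; auto. unfold K'; pose proof (Rabs_pos K); lra.
  exists (Rmin d d0). split. apply Rmin_pos; auto.
  intros h Hh Hhd Dh.
  specialize (H h Hh (Rlt_le_trans _ _ _ Hhd (Rmin_l _ _)) Dh).
  specialize (HK h Hh (Rlt_le_trans _ _ _ Hhd (Rmin_r _ _)) Dh).
  rewrite Rminus_0_r in *. rewrite Rabs_mult.
  assert (Rabs (g h) <= K') by (unfold K'; pose proof (Rle_abs K); lra).
  assert (Hk : 0 < K') by (unfold K'; pose proof (Rabs_pos K); lra).
  assert (Rabs (f h) * K' < e).
  { apply (Rmult_lt_compat_r K') in H; auto. unfold Rdiv in H. rewrite Rmult_assoc, Rinv_l in H by lra. lra. }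
  pose proof (Rabs_pos (f h)). pose proof (Rabs_pos (g h)). nra.
Qed.

Definition shift_dom (U : (nat -> R) -> Prop) y m : R -> Prop := fun h => U (upd y m (y m + h)).
Definition diff_quot (F : (nat -> R) -> R) y m : R -> R := fun h => (F (upd y m (y m + h)) - F y) / h.

Lemma has_pd_lim U F m y l : has_pd U F m y l <-> lim (shift_dom U y m) (diff_quot F y m) l.
Proof. split; intro H; exact H. Qed.

Lemma has_pd_cont U F m y l : has_pd U F m y l -> lim (shift_dom U y m) (fun h => F (upd y m (y m + h))) (F y).
Proof.
  intros H. apply has_pd_lim in H.
  assert (lim (shift_dom U y m) (fun h => F y + h * diff_quot F y m h) (F y + 0 * l)).
  { apply lim_plus. apply lim_const. apply lim_mult; auto. apply lim_id. }
  replace (F y + 0 * l) with (F y) in H0 by ring.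
  eapply lim_ext; [|exact H0]. exists 1. split. lra. intros h Hh _ _. unfold diff_quot. field. auto.
Qed.

Ltac diff_quot_ext := exists 1; split; [lra|]; intros ? ? ? ?; unfold diff_quot; field; auto.

Lemma has_pd_plus U F G m y l1 l2 : has_pd U F m y l1 -> has_pd U G m y l2 ->
  has_pd U (fun z => F z + G z) m y (l1 + l2).
Proof.
  intros H1 H2. apply has_pd_lim in H1, H2. apply has_pd_lim.
  eapply lim_ext; [|apply lim_plus; [exact H1|exact H2]]. diff_quot_ext.
Qed.

Lemma has_pd_minus U F G m y l1 l2 : has_pd U F m y l1 -> has_pd U G m y l2 ->
  has_pd U (fun z => F z - G z) m y (l1 - l2).
Proof.
  intros H1 H2. apply has_pd_lim in H1, H2. apply has_pd_lim.
  eapply lim_ext; [|apply lim_minus; [exact H1|exact H2]]. diff_quot_ext.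
Qed.

Lemma has_pd_scal U F c m y l : has_pd U F m y l -> has_pd U (fun z => c * F z) m y (c * l).
Proof.
  intros H1. apply has_pd_lim in H1. apply has_pd_lim.
  eapply lim_ext; [|apply lim_scal; exact H1]. diff_quot_ext.
Qed.

Lemma has_pd_const U c m y : has_pd U (fun _ => c) m y 0.
Proof.
  apply has_pd_lim. eapply lim_ext; [|apply lim_const]. diff_quot_ext.
Qed.

Lemma has_pd_mult U F G m y l1 l2 : has_pd U F m y l1 -> has_pd U G m y l2 ->
  has_pd U (fun z => F z * G z) m y (l1 * G y + F y * l2).
Proof.
  intros H1 H2. pose proof (has_pd_cont _ _ _ _ _ H2) as C2. apply has_pd_lim in H1, H2. apply has_pd_lim.
  eapply lim_ext; [|apply lim_plus; [apply lim_mult; [exact H1|exact C2]|apply lim_scal; exact H2]].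
  diff_quot_ext.
Qed.

Lemma has_pd_sum1 U n (F : nat -> (nat -> R) -> R) m y (L : nat -> R) :
  (forall i, (1 <= i <= n)%nat -> has_pd U (F i) m y (L i)) ->
  has_pd U (fun z => sum1 n (fun i => F i z)) m y (sum1 n L).
Proof.
  intros H. apply has_pd_lim.
  eapply lim_ext; [|apply lim_sum1; intros i Hi; apply has_pd_lim; apply H; exact Hi].
  exists 1; split; [lra|]; intros h Hh _ _. unfold diff_quot. rewrite <- sum1_minus.
  unfold Rdiv. rewrite <- sum1_scalr. apply sum1_ext. intros; auto.
Qed.

Lemma has_pd_coord U q m y : has_pd U (fun z => z q) m y (kdelta q m).
Proof.
  apply has_pd_lim. eapply lim_ext; [|apply lim_const]. exists 1; split; [lra|]. intros h Hh _ _.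
  unfold diff_quot, upd, kdelta. destruct (Nat.eqb_spec q m); [subst|]; field; auto.
Qed.

Lemma has_pd_eq U F m y l l' : has_pd U F m y l -> l = l' -> has_pd U F m y l'.
Proof. intros H ->; auto. Qed.

Definition approachable (U : (nat -> R) -> Prop) y m := nonzero_near0 (shift_dom U y m).

Lemma has_pd_unique U F m y l1 l2 : approachable U y m -> has_pd U F m y l1 -> has_pd U F m y l2 -> l1 = l2.
Proof. intros Ha H1 H2. apply has_pd_lim in H1, H2. exact (lim_unique _ _ _ _ Ha H1 H2). Qed.

Lemma pd_spec U F m y l : approachable U y m -> has_pd U F m y l -> pd U m F y = l.
Proof.
  intros Ha H. unfold pd.
  assert (Hex : exists l, has_pd U F m y l) by eauto.
  pose proof (epsilon_spec (inhabits 0) (has_pd U F m y) Hex) as Hs.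
  eapply has_pd_unique; eauto.
Qed.

Lemma pd_has_pd U F m y : (exists l, has_pd U F m y l) -> has_pd U F m y (pd U m F y).
Proof. intros Hex. unfold pd. apply epsilon_spec. auto. Qed.

Lemma has_pd_local U F G m y l :
  (exists d0, 0 < d0 /\ forall h, Rabs h < d0 -> U (upd y m (y m + h)) -> F (upd y m (y m + h)) = G (upd y m (y m + h))) ->
  F y = G y -> has_pd U F m y l -> has_pd U G m y l.
Proof.
  intros [d0 [Hd0 HFG]] Hy H. apply has_pd_lim in H. apply has_pd_lim.
  eapply lim_ext; [|exact H]. exists d0. split; auto. intros h Hh Hhd Dh. unfold diff_quot.
  rewrite HFG, Hy; auto.
Qed.

Lemma pd_local U F G m y :
  (exists d0, 0 < d0 /\ forall h, Rabs h < d0 -> U (upd y m (y m + h)) -> F (upd y m (y m + h)) = G (upd y m (y m + h))) ->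
  F y = G y -> pd U m F y = pd U m G y.
Proof.
  intros Hl Hy. unfold pd. f_equal. apply functional_extensionality. intro l.
  apply propositional_extensionality. split; apply has_pd_local; auto.
  destruct Hl as [d0 [Hd0 HFG]]. exists d0; split; auto. intros; symmetry; auto.
Qed.

(* [B] is a part of [U] on which partial derivatives in the directions [Dir] only
   depend on values on [B] (small moves in these directions that stay in [U] stay in
   [B]) and are unique ([U] accumulates at every point of [B] in these directions). *)
Class region (U B : (nat -> R) -> Prop) (Dir : nat -> Prop) : Prop := {
  region_stable : forall y m, B y -> Dir m -> exists d0, 0 < d0 /\
    forall h, Rabs h < d0 -> U (upd y m (y m + h)) -> B (upd y m (y m + h));
  region_approachable : forall y m, B y -> Dir m -> approachable U y m }.

Section RegionCalculus.
Variable (U : (nat -> R) -> Prop) (B : (nat -> R) -> Prop) (Dir : nat -> Prop).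
Context {RG : region U B Dir}.

Definition eq_on (F G : (nat -> R) -> R) := forall y, B y -> F y = G y.

Lemma has_pd_eq_on F G m y l : eq_on F G -> B y -> Dir m -> has_pd U F m y l -> has_pd U G m y l.
Proof.
  intros HFG By Dm. apply has_pd_local; auto.
  destruct (region_stable y m By Dm) as [d0 [Hd0 H]]. exists d0. split; auto.
Qed.

Lemma pd_eq_on F G m : Dir m -> eq_on F G -> eq_on (pd U m F) (pd U m G).
Proof.
  intros Dm HFG y By. apply pd_local; auto.
  destruct (region_stable y m By Dm) as [d0 [Hd0 H]]. exists d0. split; auto.
Qed.

Lemma pd_spec_on F m y l : B y -> Dir m -> has_pd U F m y l -> pd U m F y = l.
Proof. intros By Dm H. apply pd_spec; [apply region_approachable; auto|auto]. Qed.

Fixpoint Ck (k : nat) (F : (nat -> R) -> R) : Prop :=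
  (forall y m, B y -> Dir m -> exists l, has_pd U F m y l) /\
  match k with O => True | S k' => forall m, Dir m -> Ck k' (pd U m F) end.

Definition Cinf F := forall k, Ck k F.

Lemma Ck_C0 k F : Ck k F -> Ck 0 F.
Proof. destruct k; simpl; intros [H _]; auto. Qed.

Lemma Ck_has_pd k F y m : Ck k F -> B y -> Dir m -> has_pd U F m y (pd U m F y).
Proof. intros H By Dm. apply Ck_C0 in H. destruct H as [H _]. apply pd_has_pd. auto. Qed.

Lemma Ck_S k F : Ck (S k) F -> Ck k F.
Proof.
  revert F. induction k; intros F [H1 H2].
  - simpl; auto.
  - split; [auto|]. intros m Dm. apply IHk. apply H2; auto.
Qed.

Lemma Ck_eq_on k F G : eq_on F G -> Ck k F -> Ck k G.
Proof.
  revert F G. induction k; intros F G HFG [H1 H2].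
  - split; auto. intros y m By Dm. destruct (H1 y m By Dm) as [l Hl]. exists l. eapply has_pd_eq_on; eauto.
  - split. intros y m By Dm. destruct (H1 y m By Dm) as [l Hl]. exists l. eapply has_pd_eq_on; eauto.
    intros m Dm. apply (IHk (pd U m F)). apply pd_eq_on; auto. apply H2; auto.
Qed.

Lemma Cinf_pd F m : Cinf F -> Dir m -> Cinf (pd U m F).
Proof. intros H Dm k. destruct (H (S k)) as [_ H2]. apply H2; auto. Qed.

Lemma Cinf_has_pd F y m : Cinf F -> B y -> Dir m -> has_pd U F m y (pd U m F y).
Proof. intros H. apply (Ck_has_pd 0). apply H. Qed.

Lemma pd_const_on c m : Dir m -> eq_on (pd U m (fun _ => c)) (fun _ => 0).
Proof. intros Dm y By. apply pd_spec_on; auto. apply has_pd_const. Qed.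

Lemma pd_plus_on F G m : Ck 0 F -> Ck 0 G -> Dir m ->
  eq_on (pd U m (fun z => F z + G z)) (fun z => pd U m F z + pd U m G z).
Proof. intros HF HG Dm y By. apply pd_spec_on; auto. apply has_pd_plus; eapply Ck_has_pd; eauto. Qed.

Lemma pd_minus_on F G m : Ck 0 F -> Ck 0 G -> Dir m ->
  eq_on (pd U m (fun z => F z - G z)) (fun z => pd U m F z - pd U m G z).
Proof. intros HF HG Dm y By. apply pd_spec_on; auto. apply has_pd_minus; eapply Ck_has_pd; eauto. Qed.

Lemma pd_scal_on c F m : Ck 0 F -> Dir m ->
  eq_on (pd U m (fun z => c * F z)) (fun z => c * pd U m F z).
Proof. intros HF Dm y By. apply pd_spec_on; auto. apply has_pd_scal; eapply Ck_has_pd; eauto. Qed.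

Lemma pd_mult_on F G m : Ck 0 F -> Ck 0 G -> Dir m ->
  eq_on (pd U m (fun z => F z * G z)) (fun z => pd U m F z * G z + F z * pd U m G z).
Proof. intros HF HG Dm y By. apply pd_spec_on; auto. apply has_pd_mult; eapply Ck_has_pd; eauto. Qed.

Lemma pd_sum1_on n (F : nat -> (nat -> R) -> R) m : (forall i, (1 <= i <= n)%nat -> Ck 0 (F i)) -> Dir m ->
  eq_on (pd U m (fun z => sum1 n (fun i => F i z))) (fun z => sum1 n (fun i => pd U m (F i) z)).
Proof. intros HF Dm y By. apply pd_spec_on; auto. apply has_pd_sum1. intros i Hi. eapply Ck_has_pd; eauto. Qed.

Lemma Ck_const k c : Ck k (fun _ => c).
Proof.
  revert c. induction k; intros c; split; auto; try (intros; exists 0; apply has_pd_const).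
  intros m Dm. eapply Ck_eq_on. intros y By. symmetry. apply pd_const_on; auto. apply IHk.
Qed.

Lemma Ck_plus k F G : Ck k F -> Ck k G -> Ck k (fun z => F z + G z).
Proof.
  revert F G. induction k; intros F G HF HG.
  - split; auto. intros y m By Dm. eexists. apply has_pd_plus; eapply Ck_has_pd; eauto.
  - split. intros y m By Dm. eexists. apply has_pd_plus; eapply Ck_has_pd; eauto.
    intros m Dm. eapply Ck_eq_on. intros y By. symmetry. apply pd_plus_on; auto; eapply Ck_C0; eauto.
    apply IHk. apply HF; auto. apply HG; auto.
Qed.

Lemma Ck_scal k c F : Ck k F -> Ck k (fun z => c * F z).
Proof.
  revert F. induction k; intros F HF.
  - split; auto. intros y m By Dm. eexists. apply has_pd_scal; eapply Ck_has_pd; eauto.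
  - split. intros y m By Dm. eexists. apply has_pd_scal; eapply Ck_has_pd; eauto.
    intros m Dm. eapply Ck_eq_on. intros y By. symmetry. apply pd_scal_on; auto; eapply Ck_C0; eauto.
    apply IHk. apply HF; auto.
Qed.

Lemma Ck_minus k F G : Ck k F -> Ck k G -> Ck k (fun z => F z - G z).
Proof.
  intros HF HG. eapply Ck_eq_on; [|apply Ck_plus; [exact HF| apply (Ck_scal k (-1)); exact HG]].
  intros y _. ring.
Qed.

Lemma Ck_mult k F G : Ck k F -> Ck k G -> Ck k (fun z => F z * G z).
Proof.
  revert F G. induction k; intros F G HF HG.
  - split; auto. intros y m By Dm. eexists. apply has_pd_mult; eapply Ck_has_pd; eauto.
  - split. intros y m By Dm. eexists. apply has_pd_mult; eapply Ck_has_pd; eauto.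
    intros m Dm. eapply Ck_eq_on. intros y By. symmetry. apply pd_mult_on; auto; eapply Ck_C0; eauto.
    apply Ck_plus; apply IHk.
    apply HF; auto. apply Ck_S; auto. apply Ck_S; auto. apply HG; auto.
Qed.

Lemma Ck_sum1 k n (F : nat -> (nat -> R) -> R) : (forall i, (1 <= i <= n)%nat -> Ck k (F i)) ->
  Ck k (fun z => sum1 n (fun i => F i z)).
Proof.
  revert F. induction k; intros F HF.
  - split; auto. intros y m By Dm. eexists. apply has_pd_sum1. intros i Hi. eapply Ck_has_pd; eauto.
  - split. intros y m By Dm. eexists. apply has_pd_sum1. intros i Hi. eapply Ck_has_pd; eauto.
    intros m Dm. eapply Ck_eq_on. intros y By. symmetry. apply pd_sum1_on; auto. intros; eapply Ck_C0; eauto.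
    apply (IHk (fun i => pd U m (F i))). intros i Hi. apply HF; auto.
Qed.

Lemma Cinf_const c : Cinf (fun _ => c).
Proof. intro k. apply Ck_const. Qed.
Lemma Cinf_plus F G : Cinf F -> Cinf G -> Cinf (fun z => F z + G z).
Proof. intros HF HG k. apply Ck_plus; auto. Qed.
Lemma Cinf_minus F G : Cinf F -> Cinf G -> Cinf (fun z => F z - G z).
Proof. intros HF HG k. apply Ck_minus; auto. Qed.
Lemma Cinf_scal c F : Cinf F -> Cinf (fun z => c * F z).
Proof. intros HF k. apply Ck_scal; auto. Qed.
Lemma Cinf_mult F G : Cinf F -> Cinf G -> Cinf (fun z => F z * G z).
Proof. intros HF HG k. apply Ck_mult; auto. Qed.
Lemma Cinf_sum1 n (F : nat -> (nat -> R) -> R) : (forall i, (1 <= i <= n)%nat -> Cinf (F i)) ->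
  Cinf (fun z => sum1 n (fun i => F i z)).
Proof. intros HF k. apply Ck_sum1; auto. intros; apply HF; auto. Qed.
Lemma Cinf_C0 F : Cinf F -> Ck 0 F.
Proof. intros H; apply H. Qed.

Variable p : nat -> R.
Hypothesis Bp : B p.

Fixpoint flat (k : nat) (F : (nat -> R) -> R) : Prop :=
  match k with O => True | S k' => F p = 0 /\ forall m, Dir m -> flat k' (pd U m F) end.

Lemma flat_val k F : flat (S k) F -> F p = 0.
Proof. intros [H _]; auto. Qed.

Lemma flat_pd k F m : flat (S k) F -> Dir m -> flat k (pd U m F).
Proof. intros [_ H] Dm; auto. Qed.

Lemma flat_eq_on k F G : eq_on F G -> flat k F -> flat k G.
Proof.
  revert F G. induction k; intros F G HFG HF; simpl; auto.
  destruct HF as [H1 H2]. split. rewrite <- HFG; auto.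
  intros m Dm. apply (IHk (pd U m F)). apply pd_eq_on; auto. apply H2; auto.
Qed.

Lemma flat_S k F : flat (S k) F -> flat k F.
Proof.
  revert F. induction k; intros F HF; simpl; auto.
  destruct HF as [H1 H2]. split; [auto|]. intros m Dm. apply IHk. apply H2; auto.
Qed.

Lemma flat_le j k F : (j <= k)%nat -> flat k F -> flat j F.
Proof. intros H. induction H; auto. intros Hz. apply IHle. apply flat_S; auto. Qed.

Lemma flat_plus k F G : Cinf F -> Cinf G -> flat k F -> flat k G -> flat k (fun z => F z + G z).
Proof.
  revert F G. induction k; intros F G SF SG HF HG; simpl; auto.
  destruct HF as [df d2f], HG as [G1 G2]. split. rewrite df, G1; ring.
  intros m Dm. eapply flat_eq_on. intros y By. symmetry. apply pd_plus_on; auto.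
  apply IHk; try apply Cinf_pd; auto.
Qed.

Lemma flat_scal k c F : Cinf F -> flat k F -> flat k (fun z => c * F z).
Proof.
  revert F. induction k; intros F SF HF; simpl; auto.
  destruct HF as [df d2f]. split. rewrite df; ring.
  intros m Dm. eapply flat_eq_on. intros y By. symmetry. apply pd_scal_on; auto.
  apply IHk; try apply Cinf_pd; auto.
Qed.

Lemma flat_minus k F G : Cinf F -> Cinf G -> flat k F -> flat k G -> flat k (fun z => F z - G z).
Proof.
  intros SF SG HF HG. eapply flat_eq_on; [|apply flat_plus; [exact SF|apply (Cinf_scal (-1)); exact SG|exact HF|apply flat_scal; auto]].
  intros y _. ring.
Qed.

Lemma flat_sum1 k n (F : nat -> (nat -> R) -> R) : (forall i, (1 <= i <= n)%nat -> Cinf (F i)) ->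
  (forall i, (1 <= i <= n)%nat -> flat k (F i)) -> flat k (fun z => sum1 n (fun i => F i z)).
Proof.
  revert F. induction k; intros F SF HF; simpl; auto. split.
  rewrite <- (sum1_zero n). apply sum1_ext. intros i Hi. apply (HF i Hi).
  intros m Dm. eapply flat_eq_on. intros y By. symmetry. apply pd_sum1_on; auto. intros; apply Cinf_C0; auto.
  apply (IHk (fun i => pd U m (F i))). intros; apply Cinf_pd; auto. intros i Hi. apply (HF i Hi); auto.
Qed.

Lemma flat_mult N : forall j k F G, (j + k = N)%nat -> Cinf F -> Cinf G -> flat j F -> flat k G ->
  flat N (fun z => F z * G z).
Proof.
  induction N; intros j k F G Hjk SF SG HF HG; simpl; auto. split.
  - destruct j. simpl in Hjk. subst k. rewrite (flat_val _ _ HG). ring.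
    rewrite (flat_val _ _ HF). ring.
  - intros m Dm. eapply flat_eq_on. intros y By. symmetry. apply pd_mult_on; auto; apply Cinf_C0; auto.
    apply flat_plus; try (apply Cinf_mult; auto; apply Cinf_pd; auto).
    + destruct j.
      * simpl in Hjk. subst k. apply (IHN 0%nat N); simpl; auto. apply Cinf_pd; auto. apply flat_S; auto.
      * apply (IHN j k). simpl in Hjk; lia. apply Cinf_pd; auto. auto. apply flat_pd; auto. auto.
    + destruct k.
      * rewrite Nat.add_0_r in Hjk. subst j. apply (IHN N 0%nat). lia. auto. apply Cinf_pd; auto. apply flat_S; auto. simpl; auto.
      * apply (IHN j k). lia. auto. apply Cinf_pd; auto. auto. apply flat_pd; auto.
Qed.

Lemma pd2_mult_at F G a b : Cinf F -> Cinf G -> Dir a -> Dir b ->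
  pd U a (pd U b (fun z => F z * G z)) p =
  pd U a (pd U b F) p * G p + pd U b F p * pd U a G p + pd U a F p * pd U b G p + F p * pd U a (pd U b G) p.
Proof.
  intros SF SG Da Db.
  rewrite (pd_eq_on _ _ a Da (pd_mult_on F G b (Cinf_C0 _ SF) (Cinf_C0 _ SG) Db) p Bp).
  apply pd_spec_on; auto.
  eapply has_pd_eq. apply has_pd_plus; apply has_pd_mult; apply Cinf_has_pd; auto; apply Cinf_pd; auto.
  ring.
Qed.

Lemma pd2_plus_at F G a b : Cinf F -> Cinf G -> Dir a -> Dir b ->
  pd U a (pd U b (fun z => F z + G z)) p = pd U a (pd U b F) p + pd U a (pd U b G) p.
Proof.
  intros SF SG Da Db.
  rewrite (pd_eq_on _ _ a Da (pd_plus_on F G b (Cinf_C0 _ SF) (Cinf_C0 _ SG) Db) p Bp).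
  apply pd_spec_on; auto. apply has_pd_plus; apply Cinf_has_pd; auto; apply Cinf_pd; auto.
Qed.

End RegionCalculus.

Section RegionAtPoint.
Variable (U : (nat -> R) -> Prop) (B : (nat -> R) -> Prop) (Dir : nat -> Prop).
Context {RG : region U B Dir}.

Lemma Cinf_from_pd F : (forall y m, B y -> Dir m -> exists l, has_pd U F m y l) ->
  (forall m, Dir m -> exists G, eq_on B (pd U m F) G /\ Cinf U B Dir G) -> Cinf U B Dir F.
Proof.
  intros H1 H2 k. destruct k. split; auto.
  split; auto. intros m Dm. destruct (H2 m Dm) as [G [HG SG]].
  apply (Ck_eq_on U B Dir k G). intros y By; symmetry; auto. apply SG.
Qed.

Variable p : nat -> R.
Hypothesis Bp : B p.

Lemma pd_at_minus F G m : Cinf U B Dir F -> Cinf U B Dir G -> Dir m ->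
  pd U m (fun z => F z - G z) p = pd U m F p - pd U m G p.
Proof. intros. apply (pd_minus_on U B Dir); auto; apply Cinf_C0; auto. Qed.
Lemma pd_at_scal c F m : Cinf U B Dir F -> Dir m -> pd U m (fun z => c * F z) p = c * pd U m F p.
Proof. intros. apply (pd_scal_on U B Dir); auto; apply Cinf_C0; auto. Qed.
Lemma pd_at_sum1 n (F : nat -> (nat -> R) -> R) m : (forall i, (1 <= i <= n)%nat -> Cinf U B Dir (F i)) -> Dir m ->
  pd U m (fun z => sum1 n (fun i => F i z)) p = sum1 n (fun i => pd U m (F i) p).
Proof. intros. apply (pd_sum1_on U B Dir); auto. intros; apply Cinf_C0; auto. Qed.

Lemma pd2_eq_on F G a b : Dir a -> Dir b -> eq_on B F G -> pd U a (pd U b F) p = pd U a (pd U b G) p.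
Proof. intros Da Db H. apply (pd_eq_on U B Dir); auto. apply (pd_eq_on U B Dir); auto. Qed.

Lemma pd2_at_minus F G a b : Cinf U B Dir F -> Cinf U B Dir G -> Dir a -> Dir b ->
  pd U a (pd U b (fun z => F z - G z)) p = pd U a (pd U b F) p - pd U a (pd U b G) p.
Proof.
  intros SF SG Da Db.
  rewrite (pd_eq_on U B Dir _ _ a Da (pd_minus_on U B Dir F G b (Cinf_C0 _ _ _ _ SF) (Cinf_C0 _ _ _ _ SG) Db) p Bp).
  apply pd_at_minus; auto; apply Cinf_pd; auto.
Qed.

Lemma pd2_at_scal c F a b : Cinf U B Dir F -> Dir a -> Dir b ->
  pd U a (pd U b (fun z => c * F z)) p = c * pd U a (pd U b F) p.
Proof.
  intros SF Da Db.
  rewrite (pd_eq_on U B Dir _ _ a Da (pd_scal_on U B Dir c F b (Cinf_C0 _ _ _ _ SF) Db) p Bp).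
  apply pd_at_scal; auto; apply Cinf_pd; auto.
Qed.

Lemma pd2_at_sum1 n (F : nat -> (nat -> R) -> R) a b : (forall i, (1 <= i <= n)%nat -> Cinf U B Dir (F i)) -> Dir a -> Dir b ->
  pd U a (pd U b (fun z => sum1 n (fun i => F i z))) p = sum1 n (fun i => pd U a (pd U b (F i)) p).
Proof.
  intros SF Da Db.
  rewrite (pd_eq_on U B Dir _ _ a Da (pd_sum1_on U B Dir n F b (fun i Hi => Cinf_C0 _ _ _ _ (SF i Hi)) Db) p Bp).
  apply (pd_at_sum1 n (fun i => pd U b (F i))); auto. intros; apply Cinf_pd; auto.
Qed.

Lemma pd2_at_const c a b : Dir a -> Dir b -> pd U a (pd U b (fun _ => c)) p = 0.
Proof.
  intros Da Db. rewrite (pd_eq_on U B Dir _ _ a Da (pd_const_on U B Dir c b Db) p Bp).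
  apply (pd_const_on U B Dir); auto.
Qed.

Lemma flat3_pd2 F a b : flat U Dir p 3 F -> Dir a -> Dir b -> pd U a (pd U b F) p = 0.
Proof. intros HZ Da Db. apply (flat_val U Dir p 0). apply flat_pd; auto. apply flat_pd; auto. Qed.
End RegionAtPoint.

Definition clamp a b x := Rmax a (Rmin b x).

Lemma clamp_in a b x : a <= b -> a <= clamp a b x <= b.
Proof. intros. unfold clamp, Rmax, Rmin. repeat destruct Rle_dec; lra. Qed.
Lemma clamp_id a b x : a <= x <= b -> clamp a b x = x.
Proof. intros. unfold clamp, Rmax, Rmin. repeat destruct Rle_dec; lra. Qed.
Lemma clamp_lip a b x c : a <= b -> a <= c <= b -> Rabs (clamp a b x - c) <= Rabs (x - c).
Proof. intros. unfold clamp, Rmax, Rmin. repeat destruct Rle_dec; unfold Rabs; repeat destruct Rcase_abs; lra. Qed.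

(* Stdlib's [MVT] wants continuity at the end points as a function on all of [R];
   composing with [clamp a b] obtains it from continuity on [[a, b]]. *)
Lemma MVT_interval (f f' : R -> R) a b : a < b ->
  (forall c, a < c < b -> derivable_pt_lim f c (f' c)) ->
  (forall c, a <= c <= b -> forall eps, 0 < eps -> exists d, 0 < d /\
     forall x, a <= x <= b -> Rabs (x - c) < d -> Rabs (f x - f c) < eps) ->
  exists c, a < c < b /\ f b - f a = f' c * (b - a).
Proof.
  intros Hab Hd Hc.
  set (g := fun x => f (clamp a b x)).
  assert (Hg : forall c, a < c < b -> derivable_pt_lim g c (f' c)).
  { intros c Hcab eps He. destruct (Hd c Hcab eps He) as [d Hdd].
    assert (Hm : 0 < Rmin d (Rmin (c - a) (b - c))).
    { apply Rmin_pos. apply cond_pos. apply Rmin_pos; lra. }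
    exists (mkposreal _ Hm). intros h Hh Hhd. simpl in Hhd.
    unfold g. rewrite (clamp_id a b (c + h)), (clamp_id a b c) by
      (try (split; lra); pose proof (Rmin_r d (Rmin (c-a) (b-c))); pose proof (Rmin_l (c-a) (b-c));
       pose proof (Rmin_r (c-a) (b-c)); unfold Rabs in Hhd; destruct Rcase_abs in Hhd; split; lra).
    apply Hdd; auto. eapply Rlt_le_trans; [exact Hhd|apply Rmin_l]. }
  assert (pr1 : forall c, a < c < b -> derivable_pt g c).
  { intros c Hcab. exists (f' c). apply Hg; auto. }
  assert (pr2 : forall c, a < c < b -> derivable_pt id c).
  { intros c _. apply derivable_pt_id. }
  assert (Hcg : forall c, a <= c <= b -> continuity_pt g c).
  { intros c Hcab. unfold continuity_pt, continue_in, limit1_in, limit_in. simpl. unfold R_dist.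
    intros eps He. destruct (Hc c Hcab eps He) as [d [Hd0 Hdd]]. exists d. split; auto.
    intros x [_ Hx]. unfold g. rewrite (clamp_id a b c) by lra.
    apply Hdd. apply clamp_in; lra. eapply Rle_lt_trans; [apply clamp_lip; lra|auto]. }
  assert (Hci : forall c, a <= c <= b -> continuity_pt id c).
  { intros. apply derivable_continuous_pt. apply derivable_pt_id. }
  destruct (MVT g id a b pr1 pr2 Hab Hcg Hci) as [c [P HP]].
  exists c. split; auto.
  rewrite (derive_pt_eq_0 g c (f' c) (pr1 c P) (Hg c P)) in HP.
  rewrite (derive_pt_eq_0 id c 1 (pr2 c P)) in HP by apply derivable_pt_lim_id.
  unfold g, id in HP. rewrite !clamp_id in HP by lra. lra.
Qed.

Lemma has_pd_derivable_pt_lim U G m z l (P : R -> (nat -> R)) s0 : has_pd U G m z l ->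
  (exists d0, 0 < d0 /\ forall h, Rabs h < d0 -> U (upd z m (z m + h))) ->
  (forall h, upd z m (z m + h) = P (s0 + h)) -> z = P s0 ->
  derivable_pt_lim (fun s => G (P s)) s0 l.
Proof.
  intros H [d0 [Hd0 Hdom]] HP Hz eps He.
  destruct (H eps He) as [d [Hd Hdd]].
  assert (Hm : 0 < Rmin d d0) by (apply Rmin_pos; auto).
  exists (mkposreal _ Hm). intros h Hh Hhd. simpl in Hhd.
  rewrite <- HP, <- Hz. apply Hdd; auto. eapply Rlt_le_trans; [exact Hhd|apply Rmin_l].
  apply Hdom. eapply Rlt_le_trans; [exact Hhd|apply Rmin_r].
Qed.

Lemma has_pd_cont_along U G m z l (P : R -> (nat -> R)) s0 : has_pd U G m z l ->
  (forall h, upd z m (z m + h) = P (s0 + h)) -> z = P s0 ->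
  forall eps, 0 < eps -> exists d, 0 < d /\ forall h, Rabs h < d -> U (P (s0 + h)) ->
    Rabs (G (P (s0 + h)) - G (P s0)) < eps.
Proof.
  intros H HP Hz eps He. apply has_pd_cont in H. destruct (H eps He) as [d [Hd Hdd]].
  exists d. split; auto. intros h Hh Uh.
  destruct (Req_dec h 0) as [->|Hn0].
  - rewrite Rplus_0_r, Rminus_diag, Rabs_R0. auto.
  - rewrite <- HP, <- Hz. apply Hdd; auto. unfold shift_dom. rewrite HP; auto.
Qed.

Section Schwarz.
Variables (n : nat) (T : R) (V : (nat -> R) -> Prop).
Hypothesis HV : open_nbhd0 n V.
Let U := domain T V.
Variable F : (nat -> R) -> R.
Variable b : nat.
Hypothesis Hb : (1 <= b <= n)%nat.
Hypothesis HF0 : forall z, U z -> has_pd U F 0 z (pd U 0 F z).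
Hypothesis HFb : forall z, U z -> has_pd U F b z (pd U b F z).
Hypothesis H0b : forall z, U z -> has_pd U (pd U 0 F) b z (pd U b (pd U 0 F) z).
Hypothesis Hb0 : forall z, U z -> has_pd U (pd U b F) 0 z (pd U 0 (pd U b F) z).
Hypothesis C1 : cont_on n U (pd U b (pd U 0 F)).
Hypothesis C2 : cont_on n U (pd U 0 (pd U b F)).

Variable y : nat -> R.
Hypothesis Uy : U y.

Definition rect x u := upd (upd y b (y b + u)) 0 x.

Lemma rect_shift_t x u h : upd (rect x u) 0 (rect x u 0 + h) = rect (x + h) u.
Proof. unfold rect. rewrite upd_at, upd_upd. auto. Qed.

Lemma rect_shift_b x u h : upd (rect x u) b (rect x u b + h) = rect x (u + h).
Proof.
  unfold rect. apply functional_extensionality. intro k. unfold upd.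
  destruct (Nat.eqb_spec k b), (Nat.eqb_spec k 0), (Nat.eqb_spec b 0); subst; try lia; try ring.
  rewrite Nat.eqb_refl. ring.
Qed.

Lemma rect_t x u : rect x u 0 = x.
Proof. unfold rect. apply upd_at. Qed.
Lemma rect_b x u : rect x u b = y b + u.
Proof. unfold rect. rewrite upd_other by lia. apply upd_at. Qed.
Lemma rect_other x u k : k <> 0%nat -> k <> b -> rect x u k = y k.
Proof. intros. unfold rect. rewrite !upd_other; auto. Qed.

Section Rectangle.
Variable rho : R.
Hypothesis Hrho : 0 < rho.
Hypothesis HUW : forall x u, y 0 <= x <= y 0 + rho -> 0 <= u <= rho -> U (rect x u).

Lemma rect_derivable_t G x u : (forall z, U z -> has_pd U G 0 z (pd U 0 G z)) -> y 0 < x < y 0 + rho -> 0 <= u <= rho ->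
  derivable_pt_lim (fun x => G (rect x u)) x (pd U 0 G (rect x u)).
Proof.
  intros HG Hx Hu.
  eapply (has_pd_derivable_pt_lim U G 0 (rect x u) _ (fun x => rect x u) x).
  - apply HG; apply HUW; lra.
  - exists (Rmin (x - y 0) (y 0 + rho - x)); split; [apply Rmin_pos; lra|].
    intros h Hh. rewrite rect_shift_t. apply HUW; [|lra].
    pose proof (Rmin_l (x - y 0) (y 0 + rho - x)); pose proof (Rmin_r (x - y 0) (y 0 + rho - x)).
    unfold Rabs in Hh; destruct Rcase_abs in Hh; lra.
  - intros h. rewrite rect_shift_t; auto.
  - auto.
Qed.

Lemma rect_derivable_b G x u : (forall z, U z -> has_pd U G b z (pd U b G z)) -> y 0 <= x <= y 0 + rho -> 0 < u < rho ->
  derivable_pt_lim (fun u => G (rect x u)) u (pd U b G (rect x u)).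
Proof.
  intros HG Hx Hu.
  eapply (has_pd_derivable_pt_lim U G b (rect x u) _ (fun u => rect x u) u).
  - apply HG; apply HUW; lra.
  - exists (Rmin u (rho - u)); split; [apply Rmin_pos; lra|].
    intros h Hh. rewrite rect_shift_b. apply HUW; [lra|].
    pose proof (Rmin_l u (rho - u)); pose proof (Rmin_r u (rho - u)).
    unfold Rabs in Hh; destruct Rcase_abs in Hh; lra.
  - intros h. rewrite rect_shift_b. auto.
  - auto.
Qed.

Lemma rect_cont_t G u : (forall z, U z -> has_pd U G 0 z (pd U 0 G z)) -> 0 <= u <= rho ->
  forall c, y 0 <= c <= y 0 + rho -> forall eps, 0 < eps -> exists d, 0 < d /\
     forall x, y 0 <= x <= y 0 + rho -> Rabs (x - c) < d -> Rabs (G (rect x u) - G (rect c u)) < eps.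
Proof.
  intros HG Hu c Hc eps He.
  destruct (has_pd_cont_along U G 0 (rect c u) _ (fun x => rect x u) c (HG _ (HUW _ _ Hc Hu)) (fun h => rect_shift_t c u h) eq_refl eps He)
    as [d [Hd Hdd]].
  exists d. split; auto. intros x Hx Hxc. specialize (Hdd (x - c)).
    replace (c + (x - c)) with x in Hdd by ring. apply Hdd; auto.
Qed.

Lemma rect_cont_b G x : (forall z, U z -> has_pd U G b z (pd U b G z)) -> y 0 <= x <= y 0 + rho ->
  forall c, 0 <= c <= rho -> forall eps, 0 < eps -> exists d, 0 < d /\
     forall u, 0 <= u <= rho -> Rabs (u - c) < d -> Rabs (G (rect x u) - G (rect x c)) < eps.
Proof.
  intros HG Hx c Hc eps He.
  destruct (has_pd_cont_along U G b (rect x c) _ (fun u => rect x u) c (HG _ (HUW _ _ Hx Hc)) (fun h => rect_shift_b x c h) eq_refl eps He)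
    as [d [Hd Hdd]].
  exists d. split; auto. intros u Hu Huc. specialize (Hdd (u - c)).
    replace (c + (u - c)) with u in Hdd by ring. apply Hdd; auto.
Qed.

Lemma interval_cont_minus (f g : R -> R) a b' :
  (forall c, a <= c <= b' -> forall eps, 0 < eps -> exists d, 0 < d /\
     forall x, a <= x <= b' -> Rabs (x - c) < d -> Rabs (f x - f c) < eps) ->
  (forall c, a <= c <= b' -> forall eps, 0 < eps -> exists d, 0 < d /\
     forall x, a <= x <= b' -> Rabs (x - c) < d -> Rabs (g x - g c) < eps) ->
  (forall c, a <= c <= b' -> forall eps, 0 < eps -> exists d, 0 < d /\
     forall x, a <= x <= b' -> Rabs (x - c) < d -> Rabs ((f x - g x) - (f c - g c)) < eps).
Proof.
  intros Hf Hg c Hc eps He.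
  destruct (Hf c Hc (eps/2)) as [d1 [Hd1 H1]]; [lra|].
  destruct (Hg c Hc (eps/2)) as [d2 [Hd2 H2]]; [lra|].
  exists (Rmin d1 d2); split; [apply Rmin_pos; auto|]. intros x Hx Hxc.
  specialize (H1 x Hx (Rlt_le_trans _ _ _ Hxc (Rmin_l _ _))).
  specialize (H2 x Hx (Rlt_le_trans _ _ _ Hxc (Rmin_r _ _))).
  replace (f x - g x - (f c - g c)) with ((f x - f c) - (g x - g c)) by ring.
  eapply Rle_lt_trans; [apply Rabs_triang|]. rewrite Rabs_Ropp. lra.
Qed.

Definition rect_diff := F (rect (y 0 + rho) rho) - F (rect (y 0 + rho) 0) - F (rect (y 0) rho) + F (rect (y 0) 0).

Lemma rect_diff_MVT_tb : exists c e, y 0 < c < y 0 + rho /\ 0 < e < rho /\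
  rect_diff = rho * rho * pd U b (pd U 0 F) (rect c e).
Proof.
  destruct (MVT_interval (fun x => F (rect x rho) - F (rect x 0)) (fun x => pd U 0 F (rect x rho) - pd U 0 F (rect x 0)) (y 0) (y 0 + rho))
    as [c [Hc Hmv]].
  - lra.
  - intros c Hc. apply derivable_pt_lim_minus; apply rect_derivable_t; auto; lra.
  - apply interval_cont_minus; apply rect_cont_t; auto; lra.
  - destruct (MVT_interval (fun u => pd U 0 F (rect c u)) (fun u => pd U b (pd U 0 F) (rect c u)) 0 rho)
      as [e [He Hmv2]].
    + lra.
    + intros e He. apply rect_derivable_b; auto; lra.
    + apply rect_cont_b; auto; lra.
    + exists c, e. split; auto. split; auto. unfold rect_diff. simpl in Hmv, Hmv2.
      replace (F (rect (y 0 + rho) rho) - F (rect (y 0 + rho) 0) - F (rect (y 0) rho) + F (rect (y 0) 0))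
        with (F (rect (y 0 + rho) rho) - F (rect (y 0 + rho) 0) - (F (rect (y 0) rho) - F (rect (y 0) 0))) by ring.
      rewrite Hmv. rewrite Hmv2. ring.
Qed.

Lemma rect_diff_MVT_bt : exists c e, y 0 < c < y 0 + rho /\ 0 < e < rho /\
  rect_diff = rho * rho * pd U 0 (pd U b F) (rect c e).
Proof.
  destruct (MVT_interval (fun u => F (rect (y 0 + rho) u) - F (rect (y 0) u)) (fun u => pd U b F (rect (y 0 + rho) u) - pd U b F (rect (y 0) u)) 0 rho)
    as [e [He Hmv]].
  - lra.
  - intros e He. apply derivable_pt_lim_minus; apply rect_derivable_b; auto; lra.
  - apply interval_cont_minus; apply rect_cont_b; auto; lra.
  - destruct (MVT_interval (fun x => pd U b F (rect x e)) (fun x => pd U 0 (pd U b F) (rect x e)) (y 0) (y 0 + rho))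
      as [c [Hc Hmv2]].
    + lra.
    + intros c Hc. apply rect_derivable_t; auto; lra.
    + apply rect_cont_t; auto; lra.
    + exists c, e. split; auto. split; auto. unfold rect_diff. simpl in Hmv, Hmv2.
      replace (F (rect (y 0 + rho) rho) - F (rect (y 0 + rho) 0) - F (rect (y 0) rho) + F (rect (y 0) 0))
        with (F (rect (y 0 + rho) rho) - F (rect (y 0) rho) - (F (rect (y 0 + rho) 0) - F (rect (y 0) 0))) by ring.
      rewrite Hmv. replace (y 0 + rho - y 0) with rho in Hmv2 by ring. rewrite Hmv2. ring.
Qed.
End Rectangle.

Lemma rect_in_domain ry rho :
  (forall z, (forall k, (1 <= k <= n)%nat -> Rabs (z k - y k) < ry) -> V z) ->
  0 < rho < ry -> y 0 + rho < T ->
  forall x u, y 0 <= x <= y 0 + rho -> 0 <= u <= rho -> U (rect x u).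
Proof.
  intros Hry Hrho HT x u Hx Hu. pose proof Uy as [Uy0 _]. split.
  - rewrite rect_t. lra.
  - apply Hry. intros k Hk. destruct (Nat.eq_dec k b) as [->|Hkb].
    + rewrite rect_b. replace (y b + u - y b) with u by ring. rewrite Rabs_right; lra.
    + rewrite rect_other, Rminus_diag, Rabs_R0 by lia. lra.
Qed.

Lemma rect_near d rho x u : rho < d -> y 0 <= x <= y 0 + rho -> 0 <= u <= rho ->
  forall k, (k <= n)%nat -> Rabs (rect x u k - y k) < d.
Proof.
  intros Hd Hx Hu k Hk. destruct (Nat.eq_dec k 0) as [->|Hk0].
  - rewrite rect_t, Rabs_right; lra.
  - destruct (Nat.eq_dec k b) as [->|Hkb].
    + rewrite rect_b. replace (y b + u - y b) with u by ring. rewrite Rabs_right; lra.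
    + rewrite rect_other, Rminus_diag, Rabs_R0 by auto. lra.
Qed.

Lemma exists_pos_below d1 d2 d3 d4 : 0 < d1 -> 0 < d2 -> 0 < d3 -> 0 < d4 ->
  exists rho, 0 < rho /\ rho < d1 /\ rho < d2 /\ rho < d3 /\ rho < d4.
Proof.
  intros. exists (Rmin (Rmin d1 d2) (Rmin d3 d4) / 2).
  pose proof (Rmin_l (Rmin d1 d2) (Rmin d3 d4)). pose proof (Rmin_r (Rmin d1 d2) (Rmin d3 d4)).
  pose proof (Rmin_l d1 d2). pose proof (Rmin_r d1 d2). pose proof (Rmin_l d3 d4). pose proof (Rmin_r d3 d4).
  assert (0 < Rmin (Rmin d1 d2) (Rmin d3 d4)) by (repeat apply Rmin_pos; auto). lra.
Qed.

(* Both mixed partials equal [rect_diff / rho^2] at points of the rectangle, and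
   by continuity both are then close to their values at [y]. *)
Lemma schwarz_t : pd U 0 (pd U b F) y = pd U b (pd U 0 F) y.
Proof.
  destruct HV as [_ [_ HVop]]. pose proof Uy as [Uy0 Vy].
  destruct (HVop y Vy) as [ry [Hry Hryz]].
  set (A := pd U 0 (pd U b F) y). set (Bv := pd U b (pd U 0 F) y).
  destruct (Req_dec A Bv) as [|Hne]; auto. exfalso.
  set (eps := Rabs (A - Bv) / 3).
  assert (He : 0 < eps) by (unfold eps; apply Rdiv_lt_0_compat; [apply Rabs_pos_lt; lra|lra]).
  destruct (C1 y Uy eps He) as [d1 [Hd1 H1]].
  destruct (C2 y Uy eps He) as [d2 [Hd2 H2]].
  destruct (exists_pos_below d1 d2 ry (T - y 0)) as [rho [Hrho [Hr1 [Hr2 [Hr3 Hr4]]]]];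
    auto; [destruct Uy0; lra|].
  assert (HUW := rect_in_domain ry rho Hryz ltac:(lra) ltac:(lra)).
  destruct (rect_diff_MVT_tb rho Hrho HUW) as [c [e [Hc [He' HA]]]].
  destruct (rect_diff_MVT_bt rho Hrho HUW) as [c' [e' [Hc' [He'' HB]]]].
  assert (Heq : pd U b (pd U 0 F) (rect c e) = pd U 0 (pd U b F) (rect c' e')).
  { apply (Rmult_eq_reg_l (rho * rho)); [|nra]. rewrite <- HA, <- HB. auto. }
  assert (X1 : Rabs (pd U b (pd U 0 F) (rect c e) - Bv) < eps).
  { apply H1. apply HUW; lra. intros k Hk. apply (rect_near d1 rho); auto; lra. }
  assert (X2 : Rabs (pd U 0 (pd U b F) (rect c' e') - A) < eps).
  { apply H2. apply HUW; lra. intros k Hk. apply (rect_near d2 rho); auto; lra. }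
  rewrite Heq in X1.
  assert (Rabs (A - Bv) <= Rabs (pd U 0 (pd U b F) (rect c' e') - A) + Rabs (pd U 0 (pd U b F) (rect c' e') - Bv)).
  { replace (A - Bv) with (- (pd U 0 (pd U b F) (rect c' e') - A) + (pd U 0 (pd U b F) (rect c' e') - Bv)) by ring.
    eapply Rle_trans; [apply Rabs_triang|]. rewrite Rabs_Ropp. lra. }
  unfold eps in *. lra.
Qed.
End Schwarz.

Ltac apply_inst H := apply H; try typeclasses eauto.

Section InitialSlice.
Variables (n : nat) (Hn : (2 <= n)%nat) (a : nat -> nat -> R) (T : R)
  (V : (nat -> R) -> Prop) (HV : open_nbhd0 n V) (g ginv : (nat -> R) -> nat -> nat -> R)
  (Hflow : ricci_flow n (domain T V) g ginv)
  (Hinit : forall y, domain T V y -> y 0%nat = 0 ->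
     forall i j, (1 <= i <= n)%nat -> (1 <= j <= n)%nat ->
     g y i j = graph_metric n a y i j).

Let U := domain T V.

Variable r : R.
Hypothesis Hr : 0 < r.
Hypothesis HrT : r <= T.
Hypothesis HrV : forall z, (forall k, (1 <= k <= n)%nat -> Rabs (z k) < r) -> V z.

Definition Box z := 0 <= z 0%nat < r /\ forall k, (1 <= k <= n)%nat -> Rabs (z k) < r.
Definition Slice z := z 0%nat = 0 /\ forall k, (1 <= k <= n)%nat -> Rabs (z k) < r.
Definition DirTX m := (m <= n)%nat.
Definition DirX m := (1 <= m <= n)%nat.

Hypothesis Hrg : forall z, Box z -> forall i j, (1 <= i <= n)%nat -> (1 <= j <= n)%nat ->
  Rabs (g z i j - kdelta i j) <= / (4 * INR n).

Lemma Box_U z : Box z -> U z.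
Proof. intros [H1 H2]. split. lra. apply HrV. auto. Qed.
Lemma Slice_Box z : Slice z -> Box z.
Proof. intros [H1 H2]. split; auto. lra. Qed.
Lemma Box_coord z m : Box z -> (m <= n)%nat -> Rabs (z m) < r.
Proof. intros [H1 H2] Hm. destruct m. rewrite Rabs_right; lra. apply H2. lia. Qed.
Lemma origin_Slice : Slice origin.
Proof. split. reflexivity. intros. unfold origin. rewrite Rabs_R0. auto. Qed.
Lemma origin_Box : Box origin.
Proof. apply Slice_Box, origin_Slice. Qed.

Lemma Box_upd y m h : Box y -> (m <= n)%nat -> Rabs h < r - Rabs (y m) -> (m = 0%nat -> 0 <= y 0%nat + h) ->
  Box (upd y m (y m + h)).
Proof.
  intros [B1 B2] Hm Hh H0. split.
  - destruct (Nat.eqb_spec m 0).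
    + subst. specialize (H0 eq_refl). rewrite upd_at. split. lra. rewrite (Rabs_right (y 0%nat)) in Hh by (clear - B1; lra).
      pose proof (Rle_abs h). lra.
    + rewrite upd_other by lia. lra.
  - intros k Hk. destruct (Nat.eq_dec k m).
    + subst. rewrite upd_at. eapply Rle_lt_trans. apply Rabs_triang. lra.
    + rewrite upd_other by auto. auto.
Qed.

Global Instance Box_region : region U Box DirTX.
Proof.
  split.
  - intros y m By Dm. exists (r - Rabs (y m)). split. pose proof (Box_coord y m By Dm). lra.
    intros h Hh Uh. apply Box_upd; auto. intros ->.
    destruct Uh as [Uh _]. rewrite upd_at in Uh. lra.
  - intros y m By Dm d Hd. pose proof (Box_coord y m By Dm).
    exists (Rmin d (r - Rabs (y m)) / 2).
    assert (0 < Rmin d (r - Rabs (y m))) by (apply Rmin_pos; lra).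
    pose proof (Rmin_l d (r - Rabs (y m))). pose proof (Rmin_r d (r - Rabs (y m))).
    split. lra. split. rewrite Rabs_right; lra.
    apply Box_U. apply Box_upd; auto. rewrite Rabs_right; lra.
    destruct By. intros; lra.
Qed.

Lemma Slice_upd y m h : Slice y -> (1 <= m <= n)%nat -> Rabs h < r - Rabs (y m) -> Slice (upd y m (y m + h)).
Proof.
  intros [B1 B2] Hm Hh. split.
  - rewrite upd_other by lia. auto.
  - intros k Hk. destruct (Nat.eq_dec k m).
    + subst. rewrite upd_at. eapply Rle_lt_trans. apply Rabs_triang. lra.
    + rewrite upd_other by auto. auto.
Qed.

Global Instance Slice_region : region U Slice DirX.
Proof.
  split.
  - intros y m By Dm. exists (r - Rabs (y m)). split. destruct By as [_ B2]. pose proof (B2 m Dm). lra.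
    intros h Hh Uh. apply Slice_upd; auto.
  - intros y m By Dm d Hd. assert (Rabs (y m) < r) by (apply By; auto).
    exists (Rmin d (r - Rabs (y m)) / 2).
    assert (0 < Rmin d (r - Rabs (y m))) by (apply Rmin_pos; lra).
    pose proof (Rmin_l d (r - Rabs (y m))). pose proof (Rmin_r d (r - Rabs (y m))).
    split. lra. split. rewrite Rabs_right; lra.
    apply Box_U, Slice_Box. apply Slice_upd; auto. rewrite Rabs_right; lra.
Qed.

Lemma g_smooth_on i j : (1 <= i <= n)%nat -> (1 <= j <= n)%nat -> smooth_on n U (fun y => g y i j).
Proof. destruct Hflow as [H _]. auto. Qed.
Lemma g_ginv y i k : U y -> (1 <= i <= n)%nat -> (1 <= k <= n)%nat ->
  sum1 n (fun j => g y i j * ginv y j k) = kdelta i k.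
Proof. destruct Hflow as [_ [_ [_ [H _]]]]. intros. apply H; auto. Qed.
Lemma ginv_g y i k : U y -> (1 <= i <= n)%nat -> (1 <= k <= n)%nat ->
  sum1 n (fun j => ginv y i j * g y j k) = kdelta i k.
Proof. destruct Hflow as [_ [_ [_ [H _]]]]. intros. apply H; auto. Qed.
Lemma g_ricci_flow y i j : U y -> (1 <= i <= n)%nat -> (1 <= j <= n)%nat ->
  has_pd U (fun z => g z i j) 0 y (-2 * Ric n U g ginv y i j).
Proof. destruct Hflow as [_ [_ [_ [_ H]]]]. intros. apply H; auto. Qed.

Section MetricSmooth.
Variables (B : (nat -> R) -> Prop) (Dir : nat -> Prop).
Context {RG : region U B Dir}.
Hypothesis BU : forall z, B z -> U z.
Hypothesis Dn : forall m, Dir m -> (m <= n)%nat.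

Lemma iter_pd_g_Ck i j k : (1 <= i <= n)%nat -> (1 <= j <= n)%nat -> forall s, (forall m, In m s -> (m <= n)%nat) ->
  Ck U B Dir k (iter_pd U s (fun y => g y i j)).
Proof.
  intros Hi Hj. induction k; intros s Hs.
  - split; auto. intros y m By Dm. apply (proj2 (g_smooth_on i j Hi Hj s Hs)); auto.
  - split. intros y m By Dm. apply (proj2 (g_smooth_on i j Hi Hj s Hs)); auto.
    intros m Dm. apply (IHk (m :: s)). intros m' [<-|Hm']; auto.
Qed.

Lemma g_Cinf i j : (1 <= i <= n)%nat -> (1 <= j <= n)%nat -> Cinf U B Dir (fun y => g y i j).
Proof. intros Hi Hj k. apply (iter_pd_g_Ck i j k Hi Hj nil). intros m []. Qed.
End MetricSmooth.

Lemma ginv_expand z i k : U z -> (1 <= i <= n)%nat -> (1 <= k <= n)%nat ->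
  ginv z i k = kdelta i k - sum1 n (fun j => ginv z i j * (g z j k - kdelta j k)).
Proof.
  intros Uz Hi Hk.
  rewrite (sum1_ext n _ (fun j => ginv z i j * g z j k - kdelta j k * ginv z i j)) by (intros; ring).
  rewrite sum1_minus, ginv_g, sum1_kdelta by auto. ring.
Qed.

Lemma INR_n_pos : 0 < INR n.
Proof. apply lt_0_INR. lia. Qed.

Lemma ginv_row_bound z i : Box z -> (1 <= i <= n)%nat -> sum1 n (fun k => Rabs (ginv z i k)) <= 2.
Proof.
  intros Bz Hi. pose proof (Box_U z Bz) as Uz.
  set (S := sum1 n (fun k => Rabs (ginv z i k))).
  set (e := / (4 * INR n)).
  pose proof INR_n_pos.
  assert (He : 0 < e) by (unfold e; apply Rinv_0_lt_compat; lra).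
  assert (Hk : forall k, (1 <= k <= n)%nat -> Rabs (ginv z i k) <= Rabs (kdelta i k) + e * S).
  { intros k Hk. rewrite ginv_expand by auto.
    eapply Rle_trans. unfold Rminus. apply Rabs_triang. rewrite Rabs_Ropp.
    apply Rplus_le_compat_l. eapply Rle_trans. apply sum1_abs.
    unfold S. rewrite <- sum1_scal. apply sum1_le. intros j Hj. rewrite Rabs_mult.
    rewrite Rmult_comm. apply Rmult_le_compat_r. apply Rabs_pos. apply Hrg; auto. }
  assert (S <= sum1 n (fun k => Rabs (kdelta i k) + e * S)) by (apply sum1_le; auto).
  rewrite sum1_plus, sum1_const in H0.
  rewrite (sum1_ext n _ (fun k => kdelta k i * 1)) in H0 by (intros; apply Rabs_kdelta).
  rewrite sum1_kdelta in H0 by auto.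
  assert (INR n * (e * S) = S / 4) by (unfold e; field; lra).
  lra.
Qed.

Lemma ginv_bound z i k : Box z -> (1 <= i <= n)%nat -> (1 <= k <= n)%nat -> Rabs (ginv z i k) <= 2.
Proof.
  intros Bz Hi Hk. eapply Rle_trans; [|apply (ginv_row_bound z i Bz Hi)].
  apply (sum1_ge_term n (fun k => Rabs (ginv z i k))); auto. intros; apply Rabs_pos.
Qed.

Lemma ginv_diff z w i k : U z -> U w -> (1 <= i <= n)%nat -> (1 <= k <= n)%nat ->
  ginv w i k - ginv z i k =
  - sum1 n (fun c => sum1 n (fun d => ginv w i c * (g w c d - g z c d) * ginv z d k)).
Proof.
  intros Uz Uw Hi Hk.
  rewrite (sum1_ext n _ (fun c => sum1 n (fun d => ginv w i c * g w c d * ginv z d k) -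
                                   ginv w i c * sum1 n (fun d => g z c d * ginv z d k))).
  2:{ intros c Hc. rewrite <- sum1_scal, <- sum1_minus. apply sum1_ext. intros; ring. }
  rewrite sum1_minus, sum1_swap.
  rewrite (sum1_ext n (fun d => sum1 n _) (fun d => kdelta d i * ginv z d k)).
  2:{ intros d Hd. rewrite sum1_scalr. rewrite ginv_g by auto. rewrite kdelta_sym. auto. }
  rewrite sum1_kdelta by auto.
  rewrite (sum1_ext n (fun c => ginv w i c * _) (fun c => kdelta c k * ginv w i c)).
  2:{ intros c Hc. rewrite g_ginv by auto. ring. }
  rewrite sum1_kdelta by auto. ring.
Qed.

Lemma Box_near z m : Box z -> (m <= n)%nat -> exists d0, 0 < d0 /\
  forall h, Rabs h < d0 -> U (upd z m (z m + h)) -> Box (upd z m (z m + h)).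
Proof. intros Bz Hm. apply (@region_stable U Box DirTX Box_region); auto. Qed.

Lemma ginv_cont z m i k : Box z -> (m <= n)%nat -> (1 <= i <= n)%nat -> (1 <= k <= n)%nat ->
  (forall c d, (1 <= c <= n)%nat -> (1 <= d <= n)%nat -> exists l, has_pd U (fun y => g y c d) m z l) ->
  lim (shift_dom U z m) (fun h => ginv (upd z m (z m + h)) i k) (ginv z i k).
Proof.
  intros Bz Hm Hi Hk Hg.
  destruct (Box_near z m Bz Hm) as [d0 [Hd0 Hnear]].
  assert (Hl : lim (shift_dom U z m) (fun h => ginv z i k - sum1 n (fun c => sum1 n (fun d =>
       ((g (upd z m (z m + h)) c d - g z c d) * ginv z d k) * ginv (upd z m (z m + h)) i c)))
       (ginv z i k - sum1 n (fun c => sum1 n (fun d => 0)))).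
  { apply lim_minus. apply lim_const. apply lim_sum1. intros c Hc. apply lim_sum1. intros d Hd.
    apply lim_mult_zero.
    - replace 0 with (0 * ginv z d k) by ring. apply lim_mult; [|apply lim_const].
      replace 0 with (g z c d - g z c d) by ring. apply lim_minus; [|apply lim_const].
      destruct (Hg c d Hc Hd) as [l Hl]. apply (has_pd_cont _ _ _ _ _ Hl).
    - exists d0, 2. split; auto. intros h _ Hh Dh. apply ginv_bound; auto. }
  rewrite (sum1_ext n (fun c => sum1 n (fun d => 0)) (fun _ => 0)) in Hl by (intros; apply sum1_zero).
  rewrite sum1_zero, Rminus_0_r in Hl.
  eapply lim_ext; [|exact Hl]. exists d0. split; auto. intros h _ Hh Dh.
  assert (ginv (upd z m (z m + h)) i k - ginv z i k = - sum1 n (fun c => sum1 n (fun d =>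
       ((g (upd z m (z m + h)) c d - g z c d) * ginv z d k) * ginv (upd z m (z m + h)) i c))).
  { rewrite ginv_diff; auto. f_equal. apply sum1_ext; intros; apply sum1_ext; intros; ring.
    apply Box_U; auto. }
  lra.
Qed.

Lemma has_pd_ginv z m i k (L : nat -> nat -> R) : Box z -> (m <= n)%nat -> (1 <= i <= n)%nat -> (1 <= k <= n)%nat ->
  (forall c d, (1 <= c <= n)%nat -> (1 <= d <= n)%nat -> has_pd U (fun y => g y c d) m z (L c d)) ->
  has_pd U (fun y => ginv y i k) m z (- sum1 n (fun c => sum1 n (fun d => ginv z i c * L c d * ginv z d k))).
Proof.
  intros Bz Hm Hi Hk Hg. apply has_pd_lim.
  assert (Hl : lim (shift_dom U z m) (fun h => - sum1 n (fun c => sum1 n (fun d =>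
      ginv (upd z m (z m + h)) i c * diff_quot (fun y => g y c d) z m h * ginv z d k)))
      (- sum1 n (fun c => sum1 n (fun d => ginv z i c * L c d * ginv z d k)))).
  { apply lim_opp. apply lim_sum1. intros c Hc. apply lim_sum1. intros d Hd.
    apply lim_mult; [|apply lim_const]. apply lim_mult.
    apply ginv_cont; auto. intros; eexists; apply Hg; auto.
    apply has_pd_lim. apply Hg; auto. }
  eapply lim_ext; [|exact Hl]. exists 1. split. lra. intros h Hh _ Dh.
  unfold diff_quot. rewrite ginv_diff; auto. 2: apply Box_U; auto.
  unfold Rdiv. rewrite Ropp_mult_distr_l_reverse. f_equal.
  rewrite <- sum1_scalr. apply sum1_ext; intros c Hc.
  rewrite <- sum1_scalr. apply sum1_ext; intros d Hd. unfold diff_quot. unfold Rdiv. ring.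
Qed.

Lemma Ck_opp (B : (nat -> R) -> Prop) Dir {RG : region U B Dir} k F : Ck U B Dir k F -> Ck U B Dir k (fun z => - F z).
Proof. intros H. apply (Ck_eq_on U B Dir k (fun z => -1 * F z)); [intros y _; ring| exact (Ck_scal U B Dir k (-1) F H)]. Qed.

Section InverseSmooth.
Variables (B : (nat -> R) -> Prop) (Dir : nat -> Prop).
Context {RG : region U B Dir}.
#[local] Existing Instance RG.
Hypothesis BBox : forall z, B z -> Box z.
Hypothesis Dn : forall m, Dir m -> (m <= n)%nat.

Lemma BU z : B z -> U z.
Proof. intros; apply Box_U; auto. Qed.

Lemma has_pd_ginv_on y m i k : B y -> Dir m -> (1 <= i <= n)%nat -> (1 <= k <= n)%nat ->
  has_pd U (fun z => ginv z i k) m y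
    (- sum1 n (fun c => sum1 n (fun d => ginv y i c * pd U m (fun z => g z c d) y * ginv y d k))).
Proof.
  intros By Dm Hi Hk. apply has_pd_ginv; auto. intros c d Hc Hd.
  apply (Cinf_has_pd U B Dir); auto. apply g_Cinf; auto. apply BU.
Qed.

Lemma pd_ginv_on m i k : Dir m -> (1 <= i <= n)%nat -> (1 <= k <= n)%nat ->
  eq_on B (pd U m (fun z => ginv z i k))
    (fun y => - sum1 n (fun c => sum1 n (fun d => ginv y i c * pd U m (fun z => g z c d) y * ginv y d k))).
Proof. intros Dm Hi Hk y By. apply (pd_spec_on U B Dir); auto. apply has_pd_ginv_on; auto. Qed.

Lemma ginv_Ck k : forall i j, (1 <= i <= n)%nat -> (1 <= j <= n)%nat -> Ck U B Dir k (fun z => ginv z i j).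
Proof.
  induction k; intros i j Hi Hj.
  - split; auto. intros y m By Dm. eexists. apply has_pd_ginv_on; auto.
  - split. intros y m By Dm. eexists. apply has_pd_ginv_on; auto.
    intros m Dm. apply (Ck_eq_on U B Dir k _ _ (fun y By => eq_sym (pd_ginv_on m i j Dm Hi Hj y By))).
    cbv beta.
    apply (Ck_opp B Dir (RG := RG)). apply_inst Ck_sum1. intros c Hc. apply_inst Ck_sum1. intros d Hd.
    apply_inst Ck_mult. apply_inst Ck_mult. apply IHk; auto.
    apply (Cinf_pd U B Dir). apply g_Cinf; auto. apply BU. auto. apply IHk; auto.
Qed.

Lemma ginv_Cinf i j : (1 <= i <= n)%nat -> (1 <= j <= n)%nat -> Cinf U B Dir (fun z => ginv z i j).
Proof. intros Hi Hj k. apply ginv_Ck; auto. Qed.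
End InverseSmooth.

Definition df k (y : nat -> R) := sum1 n (fun q => a k q * (y q * y q)) + 2 * y k * sum1 n (fun r0 => a r0 k * y r0).
Definition d2f k c (y : nat -> R) := 2 * a k c * y c + 2 * a c k * y k + 2 * kdelta k c * sum1 n (fun r0 => a r0 k * y r0).
Definition d3f k c d := 2 * a k c * kdelta c d + 2 * a c k * kdelta k d + 2 * kdelta k c * a d k.

Lemma fcubic_eq : fcubic n a = fun y => sum1 n (fun r0 => sum1 n (fun q => a r0 q * y r0 * (y q * y q))).
Proof. apply functional_extensionality. intro y. unfold fcubic. apply sum1_ext; intros; apply sum1_ext; intros; ring. Qed.

Lemma has_pd_fcubic (D : (nat -> R) -> Prop) k y : (1 <= k <= n)%nat -> has_pd D (fcubic n a) k y (df k y).
Proof.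
  intros Hk. rewrite fcubic_eq. eapply has_pd_eq.
  - apply has_pd_sum1. intros r0 Hr0. apply has_pd_sum1. intros q Hq.
    apply has_pd_mult. apply has_pd_scal. apply has_pd_coord. apply has_pd_mult; apply has_pd_coord.
  - unfold df.
    rewrite (sum1_ext n _ (fun r0 => kdelta r0 k * sum1 n (fun q => a r0 q * (y q * y q)) +
                                     a r0 k * y r0 * (2 * y k))).
    + rewrite sum1_plus, sum1_kdelta by auto. f_equal.
      rewrite (sum1_ext n _ (fun r0 => 2 * y k * (a r0 k * y r0))) by (intros; ring).
      rewrite sum1_scal. auto.
    + intros r0 Hr0. rewrite sum1_plus. f_equal.
      * rewrite <- sum1_scal. apply sum1_ext; intros; ring.
      * rewrite (sum1_ext n _ (fun q => kdelta q k * (2 * a r0 q * y r0 * y q))) by (intros; ring).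
        rewrite sum1_kdelta by auto. ring.
Qed.

Lemma approachable_True y m : approachable (fun _ => True) y m.
Proof. intros d Hd. exists (d/2). split. lra. split. rewrite Rabs_right; lra. exact I. Qed.

Lemma pd_fcubic k : (1 <= k <= n)%nat -> pd (fun _ => True) k (fcubic n a) = df k.
Proof.
  intros Hk. apply functional_extensionality. intro y. apply pd_spec. apply approachable_True.
  apply has_pd_fcubic; auto.
Qed.

Lemma graph_metric_eq y i j : (1 <= i <= n)%nat -> (1 <= j <= n)%nat ->
  graph_metric n a y i j = kdelta i j + df i y * df j y.
Proof. intros. unfold graph_metric. rewrite !pd_fcubic; auto. Qed.

Lemma g_initial y i j : Slice y -> (1 <= i <= n)%nat -> (1 <= j <= n)%nat ->
  g y i j = kdelta i j + df i y * df j y.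
Proof.
  intros Sy Hi Hj. rewrite Hinit; auto. apply graph_metric_eq; auto.
  apply Box_U, Slice_Box; auto. apply Sy.
Qed.

Lemma has_pd_df D k c y : (1 <= k <= n)%nat -> (1 <= c <= n)%nat -> has_pd D (df k) c y (d2f k c y).
Proof.
  intros Hk Hc. unfold df. eapply has_pd_eq.
  - apply has_pd_plus. apply has_pd_sum1. intros q Hq. apply has_pd_scal. apply has_pd_mult; apply has_pd_coord.
    apply has_pd_mult. apply has_pd_scal. apply has_pd_coord. apply has_pd_sum1. intros r0 Hr0. apply has_pd_scal. apply has_pd_coord.
  - unfold d2f.
    rewrite (sum1_ext n (fun q => a k q * _) (fun q => kdelta q c * (2 * a k q * y q))) by (intros; ring).
    rewrite sum1_kdelta by auto.
    rewrite (sum1_ext n (fun r0 => a r0 k * kdelta r0 c) (fun r0 => kdelta r0 c * a r0 k)) by (intros; ring).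
    rewrite sum1_kdelta by auto. ring.
Qed.

Lemma has_pd_d2f D k c d y : (1 <= k <= n)%nat -> (1 <= c <= n)%nat -> (1 <= d <= n)%nat ->
  has_pd D (d2f k c) d y (d3f k c d).
Proof.
  intros Hk Hc Hd. unfold d2f. eapply has_pd_eq.
  - apply has_pd_plus. apply has_pd_plus. apply has_pd_scal. apply has_pd_coord. apply has_pd_scal. apply has_pd_coord.
    apply has_pd_scal. apply has_pd_sum1. intros r0 Hr0. apply has_pd_scal. apply has_pd_coord.
  - unfold d3f.
    rewrite (sum1_ext n (fun r0 => a r0 k * kdelta r0 d) (fun r0 => kdelta r0 d * a r0 k)) by (intros; ring).
    rewrite sum1_kdelta by auto. ring.
Qed.

Lemma DirX_le m : DirX m -> (m <= n)%nat.
Proof. unfold DirX. lia. Qed.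
Lemma DirTX_le m : DirTX m -> (m <= n)%nat.
Proof. auto. Qed.
Lemma Slice_U z : Slice z -> U z.
Proof. intros; apply Box_U, Slice_Box; auto. Qed.

Lemma g_Cinf_Slice i j : (1 <= i <= n)%nat -> (1 <= j <= n)%nat -> Cinf U Slice DirX (fun y => g y i j).
Proof. intros. apply (g_Cinf Slice DirX Slice_U DirX_le); auto. Qed.
Lemma g_Cinf_Box i j : (1 <= i <= n)%nat -> (1 <= j <= n)%nat -> Cinf U Box DirTX (fun y => g y i j).
Proof. intros. apply (g_Cinf Box DirTX Box_U DirTX_le); auto. Qed.
Lemma ginv_Cinf_Slice i j : (1 <= i <= n)%nat -> (1 <= j <= n)%nat -> Cinf U Slice DirX (fun y => ginv y i j).
Proof. intros. apply (ginv_Cinf Slice DirX Slice_Box DirX_le); auto. Qed.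
Lemma ginv_Cinf_Box i j : (1 <= i <= n)%nat -> (1 <= j <= n)%nat -> Cinf U Box DirTX (fun y => ginv y i j).
Proof. intros. apply (ginv_Cinf Box DirTX (fun z H => H) DirTX_le); auto. Qed.

Lemma pd_df_Slice k c : (1 <= k <= n)%nat -> DirX c -> eq_on Slice (pd U c (df k)) (d2f k c).
Proof. intros Hk Hc y Sy. apply (pd_spec_on U Slice DirX); auto. apply has_pd_df; auto. Qed.
Lemma pd_d2f_Slice k c d : (1 <= k <= n)%nat -> (1 <= c <= n)%nat -> DirX d -> eq_on Slice (pd U d (d2f k c)) (fun _ => d3f k c d).
Proof. intros Hk Hc Hd y Sy. apply (pd_spec_on U Slice DirX); auto. apply has_pd_d2f; auto. Qed.

Lemma d2f_Cinf k c : (1 <= k <= n)%nat -> (1 <= c <= n)%nat -> Cinf U Slice DirX (d2f k c).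
Proof.
  intros Hk Hc. apply_inst Cinf_from_pd. intros y m Sy Dm. eexists. apply has_pd_d2f; auto.
  intros m Dm. exists (fun _ => d3f k c m). split. apply pd_d2f_Slice; auto. apply_inst Cinf_const.
Qed.
Lemma df_Cinf k : (1 <= k <= n)%nat -> Cinf U Slice DirX (df k).
Proof.
  intros Hk. apply_inst Cinf_from_pd. intros y m Sy Dm. eexists. apply has_pd_df; auto.
  intros m Dm. exists (d2f k m). split. apply pd_df_Slice; auto. apply d2f_Cinf; auto.
Qed.

Lemma df_origin k : df k origin = 0.
Proof. unfold df, origin. rewrite (sum1_ext n _ (fun _ => 0)) by (intros; ring). rewrite sum1_zero. ring. Qed.
Lemma d2f_origin k c : d2f k c origin = 0.
Proof. unfold d2f, origin. rewrite (sum1_ext n _ (fun _ => 0)) by (intros; ring). rewrite sum1_zero. ring. Qed.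

Lemma d2f_flat k c : flat U DirX origin 1 (d2f k c).
Proof. split. apply d2f_origin. intros; exact I. Qed.
Lemma df_flat k : (1 <= k <= n)%nat -> flat U DirX origin 2 (df k).
Proof.
  intros Hk. split. apply df_origin. intros m Dm.
  apply (flat_eq_on U Slice DirX origin origin_Slice 1 (d2f k m)). intros y Sy. symmetry. apply pd_df_Slice; auto.
  apply d2f_flat.
Qed.

Definition gdev i j := fun z => g z i j - kdelta i j.

Lemma gdev_Slice i j : (1 <= i <= n)%nat -> (1 <= j <= n)%nat -> eq_on Slice (gdev i j) (fun z => df i z * df j z).
Proof. intros Hi Hj y Sy. unfold gdev. rewrite g_initial; auto. ring. Qed.
Lemma gdev_Cinf i j : (1 <= i <= n)%nat -> (1 <= j <= n)%nat -> Cinf U Slice DirX (gdev i j).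
Proof. intros. apply_inst Cinf_minus. apply g_Cinf_Slice; auto. apply_inst Cinf_const. Qed.
Lemma gdev_flat i j : (1 <= i <= n)%nat -> (1 <= j <= n)%nat -> flat U DirX origin 4 (gdev i j).
Proof.
  intros Hi Hj. apply (flat_eq_on U Slice DirX origin origin_Slice 4 (fun z => df i z * df j z)).
  intros y Sy. symmetry. apply gdev_Slice; auto.
  apply (flat_mult U Slice DirX origin origin_Slice 4 2 2); auto; try apply df_Cinf; auto; apply df_flat; auto.
Qed.

Lemma pd_g_gdev m i j : DirX m -> (1 <= i <= n)%nat -> (1 <= j <= n)%nat ->
  eq_on Slice (pd U m (fun y => g y i j)) (pd U m (gdev i j)).
Proof.
  intros Dm Hi Hj y Sy. unfold gdev.
  rewrite (pd_minus_on U Slice DirX (fun y => g y i j) (fun _ => kdelta i j) m); auto.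
  rewrite (pd_const_on U Slice DirX (kdelta i j) m); auto. ring. apply Cinf_C0, g_Cinf_Slice; auto. apply Cinf_C0. apply_inst Cinf_const.
Qed.

Lemma pd_g_flat m i j : DirX m -> (1 <= i <= n)%nat -> (1 <= j <= n)%nat ->
  flat U DirX origin 3 (pd U m (fun y => g y i j)).
Proof.
  intros Dm Hi Hj. apply (flat_eq_on U Slice DirX origin origin_Slice 3 (pd U m (gdev i j))).
  intros y Sy. symmetry. apply pd_g_gdev; auto. apply flat_pd; auto. apply gdev_flat; auto.
Qed.

Definition Chr1 j k l := fun z => pd U j (fun y => g y k l) z + pd U k (fun y => g y j l) z - pd U l (fun y => g y j k) z.

Lemma Chr1_Cinf B Dir {RG : region U B Dir} j k l : (forall i j, (1 <= i <= n)%nat -> (1 <= j <= n)%nat -> Cinf U B Dir (fun y => g y i j)) ->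
  Dir j -> Dir k -> Dir l -> (1 <= j <= n)%nat -> (1 <= k <= n)%nat -> (1 <= l <= n)%nat -> Cinf U B Dir (Chr1 j k l).
Proof.
  intros Hg Dj Dk rect_diff Hj Hk Hl. unfold Chr1. apply_inst Cinf_minus. apply_inst Cinf_plus. all: apply Cinf_pd; auto.
Qed.
Lemma Chr1_Cinf_Slice j k l : (1 <= j <= n)%nat -> (1 <= k <= n)%nat -> (1 <= l <= n)%nat -> Cinf U Slice DirX (Chr1 j k l).
Proof. intros. apply_inst Chr1_Cinf; auto. apply g_Cinf_Slice. Qed.
Lemma Chr1_Cinf_Box j k l : (1 <= j <= n)%nat -> (1 <= k <= n)%nat -> (1 <= l <= n)%nat -> Cinf U Box DirTX (Chr1 j k l).
Proof. intros. apply_inst Chr1_Cinf; auto; unfold DirTX; try lia. apply g_Cinf_Box. Qed.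

Lemma Chr1_flat j k l : (1 <= j <= n)%nat -> (1 <= k <= n)%nat -> (1 <= l <= n)%nat -> flat U DirX origin 3 (Chr1 j k l).
Proof.
  intros Hj Hk Hl. unfold Chr1.
  apply (flat_minus U Slice DirX origin origin_Slice). apply_inst Cinf_plus; apply Cinf_pd; auto; apply g_Cinf_Slice; auto.
  apply Cinf_pd; auto; apply g_Cinf_Slice; auto.
  apply (flat_plus U Slice DirX origin origin_Slice); try (apply Cinf_pd; auto; apply g_Cinf_Slice; auto); apply pd_g_flat; auto.
  apply pd_g_flat; auto.
Qed.

Definition Chr j k m := fun z => Gamma n U g ginv z j k m.

Lemma Chr_Cinf B Dir {RG : region U B Dir} j k m :
  (forall i j, (1 <= i <= n)%nat -> (1 <= j <= n)%nat -> Cinf U B Dir (fun y => g y i j)) ->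
  (forall i j, (1 <= i <= n)%nat -> (1 <= j <= n)%nat -> Cinf U B Dir (fun y => ginv y i j)) ->
  (forall i, (1 <= i <= n)%nat -> Dir i) ->
  (1 <= j <= n)%nat -> (1 <= k <= n)%nat -> (1 <= m <= n)%nat -> Cinf U B Dir (Chr j k m).
Proof.
  intros Hg Hgi HD Hj Hk Hm. unfold Chr, Gamma. apply_inst Cinf_scal. apply_inst Cinf_sum1. intros l Hl.
  apply_inst Cinf_mult. apply Hgi; auto. apply_inst (Chr1_Cinf B Dir); auto.
Qed.

Lemma Chr_Cinf_Slice j k m : (1 <= j <= n)%nat -> (1 <= k <= n)%nat -> (1 <= m <= n)%nat -> Cinf U Slice DirX (Chr j k m).
Proof. intros. apply_inst Chr_Cinf; auto. apply g_Cinf_Slice. apply ginv_Cinf_Slice. Qed.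
Lemma Chr_Cinf_Box j k m : (1 <= j <= n)%nat -> (1 <= k <= n)%nat -> (1 <= m <= n)%nat -> Cinf U Box DirTX (Chr j k m).
Proof. intros. apply_inst Chr_Cinf; auto. apply g_Cinf_Box. apply ginv_Cinf_Box. intros; unfold DirTX; lia. Qed.

Lemma Chr_flat j k m : (1 <= j <= n)%nat -> (1 <= k <= n)%nat -> (1 <= m <= n)%nat -> flat U DirX origin 3 (Chr j k m).
Proof.
  intros Hj Hk Hm. unfold Chr, Gamma.
  apply (flat_scal U Slice DirX origin origin_Slice). apply_inst Cinf_sum1. intros; apply_inst Cinf_mult. apply ginv_Cinf_Slice; auto. apply Chr1_Cinf_Slice; auto.
  apply (flat_sum1 U Slice DirX origin origin_Slice). intros; apply_inst Cinf_mult. apply ginv_Cinf_Slice; auto. apply Chr1_Cinf_Slice; auto.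
  intros l Hl. apply (flat_mult U Slice DirX origin origin_Slice 3 0 3); auto. apply ginv_Cinf_Slice; auto. apply Chr1_Cinf_Slice; auto.
  simpl; auto. apply Chr1_flat; auto.
Qed.

Definition Chr_err j k m := fun z => /2 * sum1 n (fun l => (ginv z m l - kdelta m l) * Chr1 j k l z).

Lemma Chr_split j k m : (1 <= m <= n)%nat ->
  (fun z => Gamma n U g ginv z j k m) = (fun z => /2 * Chr1 j k m z + Chr_err j k m z).
Proof.
  intros Hm. apply functional_extensionality. intro z. unfold Gamma, Chr_err.
  rewrite <- Rmult_plus_distr_l. f_equal.
  rewrite (sum1_ext n (fun l => ginv z m l * _) (fun l => (ginv z m l - kdelta m l) * Chr1 j k l z + kdelta m l * Chr1 j k l z)).
  rewrite sum1_plus, sum1_kdelta_l by auto. ring.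
  intros l Hl. unfold Chr1. ring.
Qed.

Lemma ginv_dev_Slice m l : (1 <= m <= n)%nat -> (1 <= l <= n)%nat ->
  eq_on Slice (fun z => ginv z m l - kdelta m l) (fun z => - sum1 n (fun q => ginv z m q * gdev q l z)).
Proof. intros Hm Hl z Sz. rewrite ginv_expand; auto. unfold gdev. ring. apply Slice_U; auto. Qed.

Lemma ginv_dev_flat m l : (1 <= m <= n)%nat -> (1 <= l <= n)%nat -> flat U DirX origin 4 (fun z => ginv z m l - kdelta m l).
Proof.
  intros Hm Hl. apply (flat_eq_on U Slice DirX origin origin_Slice 4 (fun z => - sum1 n (fun q => ginv z m q * gdev q l z))).
  intros z Sz. symmetry. apply ginv_dev_Slice; auto.
  apply (flat_eq_on U Slice DirX origin origin_Slice 4 (fun z => -1 * sum1 n (fun q => ginv z m q * gdev q l z))).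
  intros z _. ring.
  apply (flat_scal U Slice DirX origin origin_Slice). apply_inst Cinf_sum1. intros; apply_inst Cinf_mult. apply ginv_Cinf_Slice; auto. apply gdev_Cinf; auto.
  apply (flat_sum1 U Slice DirX origin origin_Slice). intros; apply_inst Cinf_mult. apply ginv_Cinf_Slice; auto. apply gdev_Cinf; auto.
  intros q Hq. apply (flat_mult U Slice DirX origin origin_Slice 4 0 4); auto. apply ginv_Cinf_Slice; auto. apply gdev_Cinf; auto.
  simpl; auto. apply gdev_flat; auto.
Qed.

Lemma Chr_err_Cinf B Dir {RG : region U B Dir} j k m :
  (forall i j, (1 <= i <= n)%nat -> (1 <= j <= n)%nat -> Cinf U B Dir (fun y => g y i j)) ->
  (forall i j, (1 <= i <= n)%nat -> (1 <= j <= n)%nat -> Cinf U B Dir (fun y => ginv y i j)) ->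
  (forall i, (1 <= i <= n)%nat -> Dir i) ->
  (1 <= j <= n)%nat -> (1 <= k <= n)%nat -> (1 <= m <= n)%nat -> Cinf U B Dir (Chr_err j k m).
Proof.
  intros Hg Hgi HD Hj Hk Hm. unfold Chr_err. apply_inst Cinf_scal. apply_inst Cinf_sum1. intros l Hl.
  apply_inst Cinf_mult. apply_inst Cinf_minus. apply Hgi; auto. apply_inst Cinf_const. apply_inst (Chr1_Cinf B Dir); auto.
Qed.
Lemma Chr_err_Cinf_Slice j k m : (1 <= j <= n)%nat -> (1 <= k <= n)%nat -> (1 <= m <= n)%nat -> Cinf U Slice DirX (Chr_err j k m).
Proof. intros. apply_inst Chr_err_Cinf; auto. apply g_Cinf_Slice. apply ginv_Cinf_Slice. Qed.

Lemma Chr_err_flat j k m : (1 <= j <= n)%nat -> (1 <= k <= n)%nat -> (1 <= m <= n)%nat -> flat U DirX origin 7 (Chr_err j k m).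
Proof.
  intros Hj Hk Hm. unfold Chr_err.
  assert (S1 : forall l, (1 <= l <= n)%nat -> Cinf U Slice DirX (fun z => (ginv z m l - kdelta m l) * Chr1 j k l z)).
  { intros l Hl. apply_inst Cinf_mult. apply_inst Cinf_minus. apply ginv_Cinf_Slice; auto. apply_inst Cinf_const. apply Chr1_Cinf_Slice; auto. }
  apply (flat_scal U Slice DirX origin origin_Slice). apply_inst Cinf_sum1. exact S1.
  apply (flat_sum1 U Slice DirX origin origin_Slice). exact S1.
  intros l Hl. apply (flat_mult U Slice DirX origin origin_Slice 7 4 3); auto.
  apply_inst Cinf_minus. apply ginv_Cinf_Slice; auto. apply_inst Cinf_const. apply Chr1_Cinf_Slice; auto. apply ginv_dev_flat; auto. apply Chr1_flat; auto.
Qed.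

Lemma Rup_Cinf B Dir {RG : region U B Dir} i j k m :
  (forall i j, (1 <= i <= n)%nat -> (1 <= j <= n)%nat -> Cinf U B Dir (fun y => g y i j)) ->
  (forall i j, (1 <= i <= n)%nat -> (1 <= j <= n)%nat -> Cinf U B Dir (fun y => ginv y i j)) ->
  (forall i, (1 <= i <= n)%nat -> Dir i) ->
  (1 <= i <= n)%nat -> (1 <= j <= n)%nat -> (1 <= k <= n)%nat -> (1 <= m <= n)%nat ->
  Cinf U B Dir (fun z => Rup n U g ginv z i j k m).
Proof.
  intros Hg Hgi HD Hi Hj Hk Hm. unfold Rup. apply_inst Cinf_plus. apply_inst Cinf_minus.
  apply Cinf_pd; auto. apply (Chr_Cinf B Dir); auto.
  apply Cinf_pd; auto. apply (Chr_Cinf B Dir); auto.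
  apply_inst Cinf_sum1. intros p Hp. apply_inst Cinf_minus; apply_inst Cinf_mult; apply (Chr_Cinf B Dir); auto.
Qed.

Lemma Ric_Cinf B Dir {RG : region U B Dir} j k :
  (forall i j, (1 <= i <= n)%nat -> (1 <= j <= n)%nat -> Cinf U B Dir (fun y => g y i j)) ->
  (forall i j, (1 <= i <= n)%nat -> (1 <= j <= n)%nat -> Cinf U B Dir (fun y => ginv y i j)) ->
  (forall i, (1 <= i <= n)%nat -> Dir i) ->
  (1 <= j <= n)%nat -> (1 <= k <= n)%nat -> Cinf U B Dir (fun z => Ric n U g ginv z j k).
Proof.
  intros Hg Hgi HD Hj Hk. unfold Ric. apply_inst Cinf_sum1. intros i Hi. apply (Rup_Cinf B Dir); auto.
Qed.

Definition Rup_err i j k m := fun z => Rup n U g ginv z i j k m - /2 * (pd U i (Chr1 j k m) z - pd U j (Chr1 i k m) z).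

Lemma Rup_err_Slice i j k m : (1 <= i <= n)%nat -> (1 <= j <= n)%nat -> (1 <= k <= n)%nat -> (1 <= m <= n)%nat ->
  eq_on Slice (Rup_err i j k m) (fun z => pd U i (Chr_err j k m) z - pd U j (Chr_err i k m) z +
     sum1 n (fun p => Chr j k p z * Chr i p m z - Chr i k p z * Chr j p m z)).
Proof.
  intros Hi Hj Hk Hm z Sz. unfold Rup_err, Rup. rewrite (Chr_split j k m), (Chr_split i k m) by auto.
  rewrite (pd_plus_on U Slice DirX (fun z => /2 * Chr1 j k m z) (Chr_err j k m) i); auto.
  rewrite (pd_plus_on U Slice DirX (fun z => /2 * Chr1 i k m z) (Chr_err i k m) j); auto.
  rewrite (pd_scal_on U Slice DirX (/2) (Chr1 j k m) i); auto.
  rewrite (pd_scal_on U Slice DirX (/2) (Chr1 i k m) j); auto.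
  unfold Chr. ring.
  all: apply Cinf_C0; first [apply Chr1_Cinf_Slice; auto | apply Chr_err_Cinf_Slice; auto | apply_inst Cinf_scal; apply Chr1_Cinf_Slice; auto].
Qed.

Lemma Rup_err_flat i j k m : (1 <= i <= n)%nat -> (1 <= j <= n)%nat -> (1 <= k <= n)%nat -> (1 <= m <= n)%nat ->
  flat U DirX origin 6 (Rup_err i j k m).
Proof.
  intros Hi Hj Hk Hm. eapply (flat_eq_on U Slice DirX origin origin_Slice 6).
  intros z Sz. symmetry. apply Rup_err_Slice; auto.
  assert (SE1 : Cinf U Slice DirX (pd U i (Chr_err j k m))) by (apply Cinf_pd; auto; apply Chr_err_Cinf_Slice; auto).
  assert (SE2 : Cinf U Slice DirX (pd U j (Chr_err i k m))) by (apply Cinf_pd; auto; apply Chr_err_Cinf_Slice; auto).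
  assert (SG : forall p, (1 <= p <= n)%nat -> Cinf U Slice DirX (fun z => Chr j k p z * Chr i p m z - Chr i k p z * Chr j p m z)).
  { intros p Hp. apply_inst Cinf_minus; apply_inst Cinf_mult; apply Chr_Cinf_Slice; auto. }
  apply (flat_plus U Slice DirX origin origin_Slice).
  - apply_inst Cinf_minus; [exact SE1|exact SE2].
  - apply_inst Cinf_sum1. exact SG.
  - apply (flat_minus U Slice DirX origin origin_Slice); auto.
    apply flat_pd; auto. apply Chr_err_flat; auto.
    apply flat_pd; auto. apply Chr_err_flat; auto.
  - apply (flat_sum1 U Slice DirX origin origin_Slice); auto. intros p Hp.
    apply (flat_minus U Slice DirX origin origin_Slice); try (apply_inst Cinf_mult; apply Chr_Cinf_Slice; auto).
    apply (flat_mult U Slice DirX origin origin_Slice 6 3 3); auto; try apply Chr_Cinf_Slice; auto; apply Chr_flat; auto.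
    apply (flat_mult U Slice DirX origin origin_Slice 6 3 3); auto; try apply Chr_Cinf_Slice; auto; apply Chr_flat; auto.
Qed.

Definition Ric_lin j k := fun z => sum1 n (fun i => /2 * (pd U i (Chr1 j k i) z - pd U j (Chr1 i k i) z)).

Lemma Ric_split j k : (fun z => Ric n U g ginv z j k) = (fun z => Ric_lin j k z + sum1 n (fun i => Rup_err i j k i z)).
Proof.
  apply functional_extensionality. intro z. unfold Ric, Ric_lin, Rup_err. rewrite <- sum1_plus.
  apply sum1_ext. intros; ring.
Qed.

Lemma Ric_lin_Cinf j k : (1 <= j <= n)%nat -> (1 <= k <= n)%nat -> Cinf U Slice DirX (Ric_lin j k).
Proof.
  intros Hj Hk. unfold Ric_lin. apply_inst Cinf_sum1. intros i Hi. apply_inst Cinf_scal. apply_inst Cinf_minus; apply Cinf_pd; auto; apply Chr1_Cinf_Slice; auto.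
Qed.

Lemma Rup_err_Cinf i j k m : (1 <= i <= n)%nat -> (1 <= j <= n)%nat -> (1 <= k <= n)%nat -> (1 <= m <= n)%nat ->
  Cinf U Slice DirX (Rup_err i j k m).
Proof.
  intros. unfold Rup_err. apply_inst Cinf_minus. apply (Rup_Cinf Slice DirX); auto. apply g_Cinf_Slice. apply ginv_Cinf_Slice.
  apply_inst Cinf_scal. apply_inst Cinf_minus; apply Cinf_pd; auto; apply Chr1_Cinf_Slice; auto.
Qed.

Lemma pd2_Ric_origin_lin a0 b0 j k : (1 <= a0 <= n)%nat -> (1 <= b0 <= n)%nat -> (1 <= j <= n)%nat -> (1 <= k <= n)%nat ->
  pd U a0 (pd U b0 (fun z => Ric n U g ginv z j k)) origin = pd U a0 (pd U b0 (Ric_lin j k)) origin.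
Proof.
  intros Ha Hb Hj Hk. rewrite Ric_split.
  rewrite (pd2_plus_at U Slice DirX origin origin_Slice); auto.
  rewrite (flat3_pd2 U DirX origin (fun z => sum1 n (fun i => Rup_err i j k i z))); auto. ring.
  apply (flat_sum1 U Slice DirX origin origin_Slice). intros; apply Rup_err_Cinf; auto.
  intros i Hi. apply (flat_le U DirX origin 3 6); auto. apply Rup_err_flat; auto.
  apply Ric_lin_Cinf; auto. apply_inst Cinf_sum1. intros; apply Rup_err_Cinf; auto.
Qed.

Lemma pd_const_origin c a0 : DirX a0 -> pd U a0 (fun _ => c) origin = 0.
Proof. intros. apply (pd_const_on U Slice DirX); auto. apply origin_Slice. Qed.
Lemma pd_df_origin l a0 : (1 <= l <= n)%nat -> DirX a0 -> pd U a0 (df l) origin = 0.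
Proof. intros. rewrite (pd_df_Slice l a0); auto. apply d2f_origin. apply origin_Slice. Qed.
Lemma pd_d2f_origin k c a0 : (1 <= k <= n)%nat -> (1 <= c <= n)%nat -> DirX a0 -> pd U a0 (d2f k c) origin = d3f k c a0.
Proof. intros. rewrite (pd_d2f_Slice k c a0); auto. apply origin_Slice. Qed.
Lemma pd2_d2f_origin k c a0 b0 : (1 <= k <= n)%nat -> (1 <= c <= n)%nat -> DirX a0 -> DirX b0 ->
  pd U a0 (pd U b0 (d2f k c)) origin = 0.
Proof.
  intros Hk Hc Ha0 Hb0.
  rewrite (pd_eq_on U Slice DirX (pd U b0 (d2f k c)) (fun _ => d3f k c b0) a0 Ha0 (pd_d2f_Slice k c b0 Hk Hc Hb0) origin origin_Slice).
  apply pd_const_origin; auto.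
Qed.
Lemma pd2_df_origin l a0 b0 : (1 <= l <= n)%nat -> DirX a0 -> DirX b0 -> pd U a0 (pd U b0 (df l)) origin = d3f l b0 a0.
Proof.
  intros Hl Ha0 Hb0.
  rewrite (pd_eq_on U Slice DirX (pd U b0 (df l)) (d2f l b0) a0 Ha0 (pd_df_Slice l b0 Hl Hb0) origin origin_Slice).
  apply pd_d2f_origin; auto.
Qed.

Definition d4g_origin a0 b0 c d k l := pd U a0 (pd U b0 (pd U c (pd U d (fun y0 => g y0 k l)))) origin.
(* Leibniz rule on [df k * df l]: [df] vanishes to second order at the origin and
   its second derivatives are the constants [d3f]. *)
Definition d4g_val a0 b0 c d k l :=
  d3f k d c * d3f l b0 a0 + d3f k d b0 * d3f l c a0 + d3f k d a0 * d3f l c b0 +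
  d3f k c b0 * d3f l d a0 + d3f k c a0 * d3f l d b0 + d3f k b0 a0 * d3f l d c.

Lemma d4g_origin_val a0 b0 c d k l : DirX a0 -> DirX b0 -> DirX c -> DirX d -> (1 <= k <= n)%nat -> (1 <= l <= n)%nat ->
  d4g_origin a0 b0 c d k l = d4g_val a0 b0 c d k l.
Proof.
  intros Ha Hb Hc Hd Hk Hl. unfold d4g_origin.
  assert (E1 : eq_on Slice (pd U d (fun y0 => g y0 k l)) (fun z => d2f k d z * df l z + df k z * d2f l d z)).
  { intros y Sy. rewrite pd_g_gdev; auto.
    rewrite (pd_eq_on U Slice DirX (gdev k l) (fun z => df k z * df l z) d); auto.
    rewrite (pd_mult_on U Slice DirX); auto. rewrite !pd_df_Slice; auto.
    apply Cinf_C0, df_Cinf; auto. apply Cinf_C0, df_Cinf; auto. apply gdev_Slice; auto. }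
  assert (SP : forall k c, (1 <= k <= n)%nat -> (1 <= c <= n)%nat -> Cinf U Slice DirX (d2f k c)) by (intros; apply d2f_Cinf; auto).
  assert (SQ : forall k, (1 <= k <= n)%nat -> Cinf U Slice DirX (df k)) by (intros; apply df_Cinf; auto).
  assert (E2 : eq_on Slice (pd U c (pd U d (fun y0 => g y0 k l)))
     (fun z => ((fun _ => d3f k d c) z * df l z + d2f k d z * d2f l c z) + (d2f k c z * d2f l d z + df k z * (fun _ => d3f l d c) z))).
  { intros y Sy. rewrite (pd_eq_on U Slice DirX _ _ c Hc E1 y Sy).
    rewrite (pd_plus_on U Slice DirX); auto. rewrite !(pd_mult_on U Slice DirX); auto.
    rewrite !pd_df_Slice, !pd_d2f_Slice; auto.
    all: try (apply Cinf_C0; apply_inst Cinf_mult; auto).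
    all: apply Cinf_C0; auto. }
  rewrite (pd2_eq_on U Slice DirX origin origin_Slice _ _ a0 b0 Ha Hb E2).
  assert (SC : forall c0, Cinf U Slice DirX (fun _ : nat -> R => c0)) by (intros; apply_inst Cinf_const).
  rewrite (pd2_plus_at U Slice DirX origin origin_Slice); auto.
  2,3: apply_inst Cinf_plus; apply_inst Cinf_mult; auto.
  rewrite !(pd2_plus_at U Slice DirX origin origin_Slice); auto.
  2-5: apply_inst Cinf_mult; auto.
  rewrite !(pd2_mult_at U Slice DirX origin origin_Slice); auto.
  rewrite !(pd2_at_const U Slice DirX origin origin_Slice), !pd_const_origin; auto.
  rewrite !pd_df_origin, !pd2_df_origin, !pd_d2f_origin, !pd2_d2f_origin, !df_origin, !d2f_origin; auto.
  unfold d4g_val. ring.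
Qed.

Lemma pd3_Chr1_origin a0 b0 i j k l : DirX a0 -> DirX b0 -> DirX i -> DirX j -> DirX k -> DirX l ->
  pd U a0 (pd U b0 (pd U i (Chr1 j k l))) origin = d4g_origin a0 b0 i j k l + d4g_origin a0 b0 i k j l - d4g_origin a0 b0 i l j k.
Proof.
  intros Ha Hb Hi Hj Hk Hl.
  assert (SG : forall x y p q, DirX x -> DirX y -> DirX p -> DirX q -> Cinf U Slice DirX (pd U x (pd U y (fun y0 => g y0 p q)))).
  { intros. apply Cinf_pd; auto. apply Cinf_pd; auto. apply g_Cinf_Slice; auto. }
  assert (E : eq_on Slice (pd U i (Chr1 j k l)) (fun z => pd U i (pd U j (fun y0 => g y0 k l)) z +
     pd U i (pd U k (fun y0 => g y0 j l)) z - pd U i (pd U l (fun y0 => g y0 j k)) z)).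
  { intros y Sy. unfold Chr1. rewrite (pd_minus_on U Slice DirX); auto. rewrite (pd_plus_on U Slice DirX); auto.
    all: apply Cinf_C0; try (apply_inst Cinf_plus); apply Cinf_pd; auto; apply g_Cinf_Slice; auto. }
  rewrite (pd2_eq_on U Slice DirX origin origin_Slice _ _ a0 b0 Ha Hb E).
  rewrite (pd2_at_minus U Slice DirX origin origin_Slice); auto.
  rewrite (pd2_plus_at U Slice DirX origin origin_Slice); auto.
  apply_inst Cinf_plus; auto.
Qed.

Definition d2Ric_val a0 b0 j k := /2 * sum1 n (fun i =>
  (d4g_val a0 b0 i j k i + d4g_val a0 b0 i k j i - d4g_val a0 b0 i i j k) - (d4g_val a0 b0 j i k i + d4g_val a0 b0 j k i i - d4g_val a0 b0 j i i k)).

Lemma pd2_Ric_origin a0 b0 j k : DirX a0 -> DirX b0 -> DirX j -> DirX k ->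
  pd U a0 (pd U b0 (fun z => Ric n U g ginv z j k)) origin = d2Ric_val a0 b0 j k.
Proof.
  intros Ha Hb Hj Hk. rewrite pd2_Ric_origin_lin; auto. unfold Ric_lin.
  rewrite (pd2_at_sum1 U Slice DirX origin origin_Slice n
     (fun i z => /2 * (pd U i (Chr1 j k i) z - pd U j (Chr1 i k i) z))); auto.
  2:{ intros i Hi. apply_inst Cinf_scal. apply_inst Cinf_minus; apply Cinf_pd; auto; apply Chr1_Cinf_Slice; auto. }
  unfold d2Ric_val. rewrite <- sum1_scal. apply sum1_ext. intros i Hi.
  rewrite (pd2_at_scal U Slice DirX origin origin_Slice); auto.
  2:{ apply_inst Cinf_minus; apply Cinf_pd; auto; apply Chr1_Cinf_Slice; auto. }
  rewrite (pd2_at_minus U Slice DirX origin origin_Slice); auto.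
  2,3: apply Cinf_pd; auto; apply Chr1_Cinf_Slice; auto.
  rewrite !pd3_Chr1_origin; auto. rewrite !d4g_origin_val; auto.
Qed.

Lemma has_pd_iter_pd_g k l s m y : (1 <= k <= n)%nat -> (1 <= l <= n)%nat -> (forall m, In m s -> (m <= n)%nat) ->
  (m <= n)%nat -> U y -> has_pd U (iter_pd U s (fun y => g y k l)) m y (pd U m (iter_pd U s (fun y => g y k l)) y).
Proof.
  intros Hk Hl Hs Hm Uy. apply pd_has_pd. apply (proj2 (g_smooth_on k l Hk Hl s Hs)); auto.
Qed.
Lemma iter_pd_g_cont k l s : (1 <= k <= n)%nat -> (1 <= l <= n)%nat -> (forall m, In m s -> (m <= n)%nat) ->
  cont_on n U (iter_pd U s (fun y => g y k l)).
Proof. intros Hk Hl Hs. apply (proj1 (g_smooth_on k l Hk Hl s Hs)). Qed.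

Lemma schwarz_t_g k l s b y : (1 <= k <= n)%nat -> (1 <= l <= n)%nat -> (forall m, In m s -> (m <= n)%nat) ->
  (1 <= b <= n)%nat -> U y ->
  pd U 0 (pd U b (iter_pd U s (fun y => g y k l))) y = pd U b (pd U 0 (iter_pd U s (fun y => g y k l))) y.
Proof.
  intros Hk Hl Hs Hb Uy.
  assert (Hs0 : forall m, In m (0%nat :: s) -> (m <= n)%nat) by (intros m [<-|H]; [lia|auto]).
  assert (Hsb : forall m, In m (b :: s) -> (m <= n)%nat) by (intros m [<-|H]; [lia|auto]).
  apply (schwarz_t n T V HV); auto.
  - intros z Uz. apply has_pd_iter_pd_g; auto. lia.
  - intros z Uz. apply has_pd_iter_pd_g; auto. lia.
  - intros z Uz. apply (has_pd_iter_pd_g k l (0%nat :: s)); auto. lia.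
  - intros z Uz. apply (has_pd_iter_pd_g k l (b :: s)); auto. lia.
  - apply (iter_pd_g_cont k l (b :: 0%nat :: s)); auto. intros m [<-|[<-|H]]; auto; lia.
  - apply (iter_pd_g_cont k l (0%nat :: b :: s)); auto. intros m [<-|[<-|H]]; auto; lia.
Qed.

Lemma Box_approachable_t y : Box y -> approachable U y 0.
Proof. intros By. apply (@region_approachable U Box DirTX Box_region); auto. unfold DirTX; lia. Qed.

Lemma pd_t_g_Slice k l : (1 <= k <= n)%nat -> (1 <= l <= n)%nat ->
  eq_on Slice (pd U 0 (fun y => g y k l)) (fun z => -2 * Ric n U g ginv z k l).
Proof.
  intros Hk Hl y Sy. apply pd_spec. apply Box_approachable_t, Slice_Box; auto. apply g_ricci_flow; auto. apply Slice_U; auto.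
Qed.

Lemma Ric_Cinf_Slice k l : (1 <= k <= n)%nat -> (1 <= l <= n)%nat -> Cinf U Slice DirX (fun z => Ric n U g ginv z k l).
Proof. intros. apply_inst (Ric_Cinf Slice DirX); auto. apply g_Cinf_Slice. apply ginv_Cinf_Slice. Qed.

Lemma dt_pd2_g_origin i j k l : (1 <= i <= n)%nat -> (1 <= j <= n)%nat -> (1 <= k <= n)%nat -> (1 <= l <= n)%nat ->
  pd U 0 (pd U i (pd U j (fun y => g y k l))) origin = -2 * d2Ric_val i j k l.
Proof.
  intros Hi Hj Hk Hl.
  assert (Hs : forall m, In m (j :: nil) -> (m <= n)%nat) by (intros m [<-|[]]; lia).
  pose proof (schwarz_t_g k l (j :: nil) i origin Hk Hl Hs Hi (Box_U _ origin_Box)) as E1. simpl in E1.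
  rewrite E1.
  assert (HE : eq_on Slice (pd U 0 (pd U j (fun y => g y k l))) (pd U j (pd U 0 (fun y => g y k l)))).
  { intros y Sy. pose proof (schwarz_t_g k l nil j y Hk Hl (fun m H => False_ind _ H) Hj (Slice_U _ Sy)). simpl in H. auto. }
  rewrite (pd_eq_on U Slice DirX _ _ i Hi HE origin origin_Slice).
  rewrite (pd2_eq_on U Slice DirX origin origin_Slice _ _ i j Hi Hj (pd_t_g_Slice k l Hk Hl)).
  rewrite (pd2_at_scal U Slice DirX origin origin_Slice); auto. rewrite pd2_Ric_origin; auto.
  apply Ric_Cinf_Slice; auto.
Qed.

Lemma g_origin x y : (1 <= x <= n)%nat -> (1 <= y <= n)%nat -> g origin x y = kdelta x y.
Proof. intros. rewrite g_initial; auto. rewrite !df_origin. ring. apply origin_Slice. Qed.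
Lemma ginv_origin x y : (1 <= x <= n)%nat -> (1 <= y <= n)%nat -> ginv origin x y = kdelta x y.
Proof.
  intros Hx Hy. rewrite (ginv_expand origin x y (Box_U _ origin_Box) Hx Hy).
  rewrite (sum1_ext n _ (fun _ => 0)). rewrite sum1_zero; ring.
  intros j Hj. rewrite (g_origin j y Hj Hy). ring.
Qed.
Lemma Chr1_origin j k l : (1 <= j <= n)%nat -> (1 <= k <= n)%nat -> (1 <= l <= n)%nat -> Chr1 j k l origin = 0.
Proof. intros. apply (flat_val U DirX origin 2). apply Chr1_flat; auto. Qed.
Lemma pd_Chr1_origin i j k l : DirX i -> (1 <= j <= n)%nat -> (1 <= k <= n)%nat -> (1 <= l <= n)%nat -> pd U i (Chr1 j k l) origin = 0.
Proof. intros. apply (flat_val U DirX origin 1). apply flat_pd; auto. apply Chr1_flat; auto. Qed.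
Lemma pd_g_origin i x y : DirX i -> (1 <= x <= n)%nat -> (1 <= y <= n)%nat -> pd U i (fun z => g z x y) origin = 0.
Proof. intros. apply (flat_val U DirX origin 2). apply pd_g_flat; auto. Qed.
Lemma pd_ginv_origin i x y : DirX i -> (1 <= x <= n)%nat -> (1 <= y <= n)%nat -> pd U i (fun z => ginv z x y) origin = 0.
Proof.
  intros. rewrite (pd_ginv_on Slice DirX Slice_Box DirX_le); auto. 2: apply origin_Slice.
  rewrite (sum1_ext n _ (fun _ => 0)). rewrite sum1_zero; ring.
  intros c Hc. rewrite (sum1_ext n _ (fun _ => 0)). apply sum1_zero.
  intros d Hd. rewrite pd_g_origin; auto. ring.
Qed.
Lemma Chr_origin j k m : (1 <= j <= n)%nat -> (1 <= k <= n)%nat -> (1 <= m <= n)%nat -> Chr j k m origin = 0.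
Proof. intros. apply (flat_val U DirX origin 2). apply Chr_flat; auto. Qed.
Lemma pd_Chr_origin i j k m : DirX i -> (1 <= j <= n)%nat -> (1 <= k <= n)%nat -> (1 <= m <= n)%nat -> pd U i (Chr j k m) origin = 0.
Proof. intros. apply (flat_val U DirX origin 1). apply flat_pd; auto. apply Chr_flat; auto. Qed.
Lemma Rup_origin i j k m : (1 <= i <= n)%nat -> (1 <= j <= n)%nat -> (1 <= k <= n)%nat -> (1 <= m <= n)%nat ->
  Rup n U g ginv origin i j k m = 0.
Proof.
  intros. unfold Rup. change (fun z => Gamma n U g ginv z j k m) with (Chr j k m).
  change (fun z => Gamma n U g ginv z i k m) with (Chr i k m).
  rewrite !pd_Chr_origin; auto. rewrite (sum1_ext n _ (fun _ => 0)). rewrite sum1_zero; ring.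
  intros p Hp. change (Gamma n U g ginv origin j k p) with (Chr j k p origin).
  change (Gamma n U g ginv origin i k p) with (Chr i k p origin). rewrite !Chr_origin; auto. ring.
Qed.

Lemma has_pd_t_origin F : Cinf U Box DirTX F -> has_pd U F 0 origin (pd U 0 F origin).
Proof. intros SF. apply (Cinf_has_pd U Box DirTX); auto. apply origin_Box. unfold DirTX; lia. Qed.

Lemma DirTX_space i : (1 <= i <= n)%nat -> DirTX i.
Proof. unfold DirTX; lia. Qed.
Lemma DirTX_time : DirTX 0.
Proof. unfold DirTX; lia. Qed.

Lemma dt_pd_Chr_origin i j k m : (1 <= i <= n)%nat -> (1 <= j <= n)%nat -> (1 <= k <= n)%nat -> (1 <= m <= n)%nat ->
  pd U 0 (pd U i (Chr j k m)) origin = /2 * pd U 0 (pd U i (Chr1 j k m)) origin.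
Proof.
  intros Hi Hj Hk Hm.
  assert (E : eq_on Box (pd U i (Chr j k m)) (fun z => /2 * sum1 n (fun q =>
     pd U i (fun y => ginv y m q) z * Chr1 j k q z + ginv z m q * pd U i (Chr1 j k q) z))).
  { intros z Bz. change (Chr j k m) with (fun z => /2 * sum1 n (fun q => ginv z m q * Chr1 j k q z)).
    rewrite (pd_scal_on U Box DirTX); auto. f_equal.
    rewrite (pd_sum1_on U Box DirTX n (fun q z => ginv z m q * Chr1 j k q z)); auto.
    apply sum1_ext. intros q Hq. rewrite (pd_mult_on U Box DirTX); auto.
    apply Cinf_C0, ginv_Cinf_Box; auto. apply Cinf_C0, Chr1_Cinf_Box; auto. apply DirTX_space; auto.
    intros q Hq. apply Cinf_C0. apply_inst Cinf_mult. apply ginv_Cinf_Box; auto. apply Chr1_Cinf_Box; auto. apply DirTX_space; auto.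
    apply Cinf_C0. apply_inst Cinf_sum1. intros q Hq. apply_inst Cinf_mult. apply ginv_Cinf_Box; auto. apply Chr1_Cinf_Box; auto. apply DirTX_space; auto. }
  rewrite (pd_eq_on U Box DirTX _ _ 0 DirTX_time E origin origin_Box).
  apply (pd_spec_on U Box DirTX); auto. apply origin_Box. apply DirTX_time.
  eapply has_pd_eq. apply has_pd_scal. apply has_pd_sum1. intros q Hq. apply has_pd_plus; apply has_pd_mult; apply has_pd_t_origin.
  apply Cinf_pd. apply ginv_Cinf_Box; auto. apply DirTX_space; auto. apply Chr1_Cinf_Box; auto.
  apply ginv_Cinf_Box; auto. apply Cinf_pd. apply Chr1_Cinf_Box; auto. apply DirTX_space; auto.
  f_equal. rewrite (sum1_ext n _ (fun q => kdelta m q * pd U 0 (pd U i (Chr1 j k q)) origin)).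
  apply sum1_kdelta_l; auto.
  intros q Hq. rewrite (Chr1_origin j k q), (pd_Chr1_origin i j k q), (pd_ginv_origin i m q), (ginv_origin m q); auto. ring.
Qed.

Lemma Rup_Cinf_Box i j k m : (1 <= i <= n)%nat -> (1 <= j <= n)%nat -> (1 <= k <= n)%nat -> (1 <= m <= n)%nat ->
  Cinf U Box DirTX (fun z => Rup n U g ginv z i j k m).
Proof. intros. apply_inst (Rup_Cinf Box DirTX); auto. apply g_Cinf_Box. apply ginv_Cinf_Box. apply DirTX_space. Qed.

Lemma dt_Rup_origin i j k m : (1 <= i <= n)%nat -> (1 <= j <= n)%nat -> (1 <= k <= n)%nat -> (1 <= m <= n)%nat ->
  pd U 0 (fun z => Rup n U g ginv z i j k m) origin =
  /2 * pd U 0 (pd U i (Chr1 j k m)) origin - /2 * pd U 0 (pd U j (Chr1 i k m)) origin.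
Proof.
  intros Hi Hj Hk Hm. apply (pd_spec_on U Box DirTX); auto. apply origin_Box. apply DirTX_time.
  unfold Rup. change (fun z => Gamma n U g ginv z j k m) with (Chr j k m).
  change (fun z => Gamma n U g ginv z i k m) with (Chr i k m).
  eapply has_pd_eq. apply has_pd_plus. apply has_pd_minus; apply has_pd_t_origin; apply Cinf_pd; try apply Chr_Cinf_Box; auto; apply DirTX_space; auto.
  apply has_pd_sum1. intros p Hp. apply has_pd_minus; apply has_pd_mult; apply has_pd_t_origin; apply Chr_Cinf_Box; auto.
  rewrite !dt_pd_Chr_origin; auto.
  rewrite (sum1_ext n _ (fun _ => 0)). rewrite sum1_zero. ring.
  intros p Hp. change (Gamma n U g ginv origin j k p) with (Chr j k p origin).
  change (Gamma n U g ginv origin i k p) with (Chr i k p origin).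
  change (Gamma n U g ginv origin i p m) with (Chr i p m origin).
  change (Gamma n U g ginv origin j p m) with (Chr j p m origin).
  rewrite !Chr_origin; auto. ring.
Qed.

Lemma dt_pd_Chr1_origin i j k l : (1 <= i <= n)%nat -> (1 <= j <= n)%nat -> (1 <= k <= n)%nat -> (1 <= l <= n)%nat ->
  pd U 0 (pd U i (Chr1 j k l)) origin = -2 * d2Ric_val i j k l + -2 * d2Ric_val i k j l - -2 * d2Ric_val i l j k.
Proof.
  intros Hi Hj Hk Hl.
  assert (SG : forall x y p q, (1 <= x <= n)%nat -> (1 <= y <= n)%nat -> (1 <= p <= n)%nat -> (1 <= q <= n)%nat ->
    Cinf U Box DirTX (pd U x (pd U y (fun y0 => g y0 p q)))).
  { intros. apply Cinf_pd; try apply DirTX_space; auto. apply Cinf_pd; try apply DirTX_space; auto. apply g_Cinf_Box; auto. }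
  assert (E : eq_on Box (pd U i (Chr1 j k l)) (fun z => pd U i (pd U j (fun y0 => g y0 k l)) z +
     pd U i (pd U k (fun y0 => g y0 j l)) z - pd U i (pd U l (fun y0 => g y0 j k)) z)).
  { intros y By. unfold Chr1. rewrite (pd_minus_on U Box DirTX); auto. rewrite (pd_plus_on U Box DirTX); auto.
    all: try apply DirTX_space; auto.
    all: apply Cinf_C0; try (apply_inst Cinf_plus); apply Cinf_pd; try apply DirTX_space; auto; apply g_Cinf_Box; auto. }
  rewrite (pd_eq_on U Box DirTX _ _ 0 DirTX_time E origin origin_Box).
  apply (pd_spec_on U Box DirTX); auto. apply origin_Box. apply DirTX_time.
  eapply has_pd_eq. apply has_pd_minus. apply has_pd_plus. all: try (apply has_pd_t_origin; apply SG; auto).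
  rewrite !dt_pd2_g_origin; auto.
Qed.

(* [d_t R_ijkl] at the origin is [(d_t d_i Chr1_jkl - d_t d_j Chr1_ikl) / 2], and
   [d_t d_a d_b g_cd = -2 d_a d_b Ric_cd] there. *)
Definition dtRm_val i j k l :=
  /2 * ((-2 * d2Ric_val i j k l + -2 * d2Ric_val i k j l - -2 * d2Ric_val i l j k) - (-2 * d2Ric_val j i k l + -2 * d2Ric_val j k i l - -2 * d2Ric_val j l i k)).

Lemma dt_Rm_origin i j k l : (1 <= i <= n)%nat -> (1 <= j <= n)%nat -> (1 <= k <= n)%nat -> (1 <= l <= n)%nat ->
  has_pd U (fun z => Rm n U g ginv z i j k l) 0 origin (dtRm_val i j k l).
Proof.
  intros Hi Hj Hk Hl. unfold Rm. eapply has_pd_eq.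
  apply has_pd_sum1. intros m Hm. apply has_pd_mult; apply has_pd_t_origin. apply Rup_Cinf_Box; auto. apply g_Cinf_Box; auto.
  rewrite (sum1_ext n _ (fun m => kdelta m l * pd U 0 (fun z => Rup n U g ginv z i j k m) origin)).
  rewrite sum1_kdelta by auto. rewrite dt_Rup_origin, !dt_pd_Chr1_origin; auto. unfold dtRm_val. ring.
  intros m Hm. rewrite Rup_origin, g_origin; auto. rewrite kdelta_sym. ring.
Qed.

Lemma Rm_origin i j k l : (1 <= i <= n)%nat -> (1 <= j <= n)%nat -> (1 <= k <= n)%nat -> (1 <= l <= n)%nat ->
  Rm n U g ginv origin i j k l = 0.
Proof.
  intros. unfold Rm. rewrite (sum1_ext n _ (fun _ => 0)). apply sum1_zero.
  intros m Hm. rewrite Rup_origin; auto. ring.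
Qed.
End InitialSlice.

Ltac eqb_simpl :=
  repeat match goal with
  | |- context [Nat.eqb ?x ?x] => rewrite (Nat.eqb_refl x)
  | |- context [Nat.eqb ?x ?y] =>
      first [ let H := fresh in assert (H : x <> y) by lia; rewrite (proj2 (Nat.eqb_neq x y) H); clear H
            | let H := fresh in assert (H : x = y) by lia; rewrite (proj2 (Nat.eqb_eq x y) H); clear H ]
  end; cbv beta iota.

Lemma sum1_split n F x : (1 <= x <= n)%nat -> sum1 n F = F x + sum1 n (fun q => if Nat.eqb q x then 0 else F q).
Proof.
  intros Hx. rewrite <- (sum1_kdelta n x F Hx). rewrite <- sum1_plus. apply sum1_ext. intros q Hq.
  unfold kdelta. destruct (Nat.eqb_spec q x); subst; ring.
Qed.

Section Algebra.
Variables (n : nat) (a : nat -> nat -> R).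
Notation dR := (dtRm_val n a).

Definition d2Ric_term a0 b0 j k i :=
  (d4g_val a a0 b0 i j k i + d4g_val a a0 b0 i k j i - d4g_val a a0 b0 i i j k) - (d4g_val a a0 b0 j i k i + d4g_val a a0 b0 j k i i - d4g_val a a0 b0 j i i k).
Definition dtRm_term i j k l q :=
  /2 * (- (d2Ric_term i j k l q + d2Ric_term i k j l q - d2Ric_term i l j k q) + (d2Ric_term j i k l q + d2Ric_term j k i l q - d2Ric_term j l i k q)).

Lemma d2Ric_val_sum a0 b0 j k : d2Ric_val n a a0 b0 j k = sum1 n (fun q => /2 * d2Ric_term a0 b0 j k q).
Proof. unfold d2Ric_val, d2Ric_term. rewrite sum1_scal. reflexivity. Qed.

Lemma dtRm_sum i j k l : dR i j k l = sum1 n (dtRm_term i j k l).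
Proof.
  unfold dtRm_val. rewrite !d2Ric_val_sum.
  rewrite (sum1_ext n (dtRm_term i j k l) (fun q => -1 * (/2 * d2Ric_term i j k l q) + (-1 * (/2 * d2Ric_term i k j l q) +
     (1 * (/2 * d2Ric_term i l j k q) + (1 * (/2 * d2Ric_term j i k l q) + (1 * (/2 * d2Ric_term j k i l q) + -1 * (/2 * d2Ric_term j l i k q)))))))
    by (intros; unfold dtRm_term; ring).
  rewrite !sum1_plus, !sum1_scal. field.
Qed.

Ltac dtRm_term_eval := unfold dtRm_term, d2Ric_term, d4g_val, d3f, kdelta; eqb_simpl; field.

Lemma dtRm_distinct i j k l : (1 <= i <= n)%nat -> (1 <= j <= n)%nat -> (1 <= k <= n)%nat -> (1 <= l <= n)%nat ->
  i <> j -> i <> k -> i <> l -> j <> k -> j <> l -> k <> l -> dR i j k l = 0.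
Proof.
  intros Hi Hj Hk Hl H1 H2 H3 H4 H5 H6. rewrite dtRm_sum.
  rewrite (sum1_split n _ i), (sum1_split n _ j), (sum1_split n _ k), (sum1_split n _ l) by auto.
  rewrite (sum1_ext n _ (fun _ => 0)). rewrite sum1_zero. cbv beta. eqb_simpl.
  dtRm_term_eval.
  intros q Hq. destruct (Nat.eqb_spec q l). ring. destruct (Nat.eqb_spec q k). ring.
  destruct (Nat.eqb_spec q j). ring. destruct (Nat.eqb_spec q i). ring.
  dtRm_term_eval.
Qed.
Lemma dtRm_kj i j l : (1 <= i <= n)%nat -> (1 <= j <= n)%nat -> (1 <= l <= n)%nat -> i <> j -> i <> l -> j <> l ->
  dR i j j l = 8 * (a i l * a l j + a l i * a i j) - 8 * (a i j * a l j).
Proof.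
  intros Hi Hj Hl H1 H2 H3. rewrite dtRm_sum.
  rewrite (sum1_split n _ i), (sum1_split n _ j), (sum1_split n _ l) by auto.
  rewrite (sum1_ext n _ (fun _ => 0)). rewrite sum1_zero. cbv beta. eqb_simpl.
  dtRm_term_eval.
  intros q Hq. destruct (Nat.eqb_spec q l). ring. destruct (Nat.eqb_spec q j). ring.
  destruct (Nat.eqb_spec q i). ring.
  dtRm_term_eval.
Qed.
Lemma dtRm_lj i j k : (1 <= i <= n)%nat -> (1 <= j <= n)%nat -> (1 <= k <= n)%nat -> i <> j -> i <> k -> j <> k ->
  dR i j k j = 8 * (a i j * a k j) - 8 * (a i k * a k j + a k i * a i j).
Proof.
  intros Hi Hj Hk H1 H2 H3. rewrite dtRm_sum.
  rewrite (sum1_split n _ i), (sum1_split n _ j), (sum1_split n _ k) by auto.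
  rewrite (sum1_ext n _ (fun _ => 0)). rewrite sum1_zero. cbv beta. eqb_simpl.
  dtRm_term_eval.
  intros q Hq. destruct (Nat.eqb_spec q k). ring. destruct (Nat.eqb_spec q j). ring.
  destruct (Nat.eqb_spec q i). ring.
  dtRm_term_eval.
Qed.
Lemma dtRm_ki i j l : (1 <= i <= n)%nat -> (1 <= j <= n)%nat -> (1 <= l <= n)%nat -> i <> j -> i <> l -> j <> l ->
  dR i j i l = 8 * (a l i * a j i) - 8 * (a j l * a l i + a l j * a j i).
Proof.
  intros Hi Hj Hl H1 H2 H3. rewrite dtRm_sum.
  rewrite (sum1_split n _ i), (sum1_split n _ j), (sum1_split n _ l) by auto.
  rewrite (sum1_ext n _ (fun _ => 0)). rewrite sum1_zero. cbv beta. eqb_simpl.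
  dtRm_term_eval.
  intros q Hq. destruct (Nat.eqb_spec q l). ring. destruct (Nat.eqb_spec q j). ring.
  destruct (Nat.eqb_spec q i). ring.
  dtRm_term_eval.
Qed.
Lemma dtRm_diag i j : (1 <= i <= n)%nat -> (1 <= j <= n)%nat -> i <> j ->
  dR i j i j = 8 * (a i j ^ 2 + a j i ^ 2)
           - 8 * (sum1 n (fun q => if (Nat.eqb q i || Nat.eqb q j)%bool then 0 else a q i * a q j)
                  + 3 * a i i * a i j + 3 * a j j * a j i).
Proof.
  intros Hi Hj H1. rewrite dtRm_sum.
  rewrite (sum1_split n _ i), (sum1_split n _ j) by auto.
  rewrite (sum1_ext n _ (fun q => -8 * (if (Nat.eqb q i || Nat.eqb q j)%bool then 0 else a q i * a q j))).
  rewrite sum1_scal. set (S := sum1 n _). cbv beta. eqb_simpl.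
  dtRm_term_eval.
  intros q Hq. destruct (Nat.eqb_spec q j); destruct (Nat.eqb_spec q i); unfold orb; cbv beta iota; try ring.
  dtRm_term_eval.
Qed.
Lemma d3f_sym k c d : d3f a k c d = d3f a k d c.
Proof. unfold d3f, kdelta. destruct (Nat.eqb_spec c d), (Nat.eqb_spec d c), (Nat.eqb_spec k d), (Nat.eqb_spec k c); subst; try lia; ring. Qed.
Lemma d4g_val_sym a0 b0 c d k l : d4g_val a a0 b0 c d k l = d4g_val a b0 a0 c d k l.
Proof. unfold d4g_val. rewrite (d3f_sym l a0 b0), (d3f_sym k a0 b0). ring. Qed.
Lemma d2Ric_val_sym a0 b0 j k : d2Ric_val n a a0 b0 j k = d2Ric_val n a b0 a0 j k.
Proof. unfold d2Ric_val. f_equal. apply sum1_ext. intros. rewrite !(d4g_val_sym a0 b0). auto. Qed.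

Lemma dtRm_antisym i j k l : dR j i k l = - dR i j k l.
Proof. unfold dtRm_val. ring. Qed.
Lemma dtRm_ii i k l : dR i i k l = 0.
Proof. unfold dtRm_val. ring. Qed.
Lemma dtRm_kk i j k : dR i j k k = 0.
Proof. unfold dtRm_val. rewrite (d2Ric_val_sym j i k k). ring. Qed.

Lemma dtRm_off_diagonal (Hc : forall al be ga, (1 <= al <= n)%nat -> (1 <= be <= n)%nat ->
      (1 <= ga <= n)%nat -> al <> be -> be <> ga -> al <> ga ->
      a al be * a be ga + a be al * a al ga = a al ga * a be ga)
  i j k l : (1 <= i <= n)%nat -> (1 <= j <= n)%nat -> (1 <= k <= n)%nat -> (1 <= l <= n)%nat ->
  ~ (i = k /\ j = l) -> ~ (i = l /\ j = k) -> dR i j k l = 0.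
Proof.
  intros Hi Hj Hk Hl H1 H2.
  destruct (Nat.eq_dec i j) as [<-|Hij]. apply dtRm_ii.
  destruct (Nat.eq_dec k l) as [<-|Hkl]. apply dtRm_kk.
  destruct (Nat.eq_dec i k) as [<-|Hik].
  { assert (j <> l) by tauto. rewrite dtRm_ki; auto. rewrite (Hc j l i); auto. ring. }
  destruct (Nat.eq_dec j l) as [<-|Hjl].
  { rewrite dtRm_lj; auto. rewrite (Hc i k j); auto. ring. }
  destruct (Nat.eq_dec j k) as [<-|Hjk].
  { rewrite dtRm_kj; auto. rewrite (Hc i l j); auto. ring. }
  destruct (Nat.eq_dec i l) as [<-|Hil].
  { rewrite dtRm_antisym, dtRm_lj; auto. rewrite (Hc j k i); auto. ring. }
  apply dtRm_distinct; auto.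
Qed.
End Algebra.

Lemma uniform_delta (P : nat -> R -> Prop) m :
  (forall i d d', 0 < d' <= d -> P i d -> P i d') ->
  (forall i, (1 <= i <= m)%nat -> exists d, 0 < d /\ P i d) ->
  exists d, 0 < d /\ forall i, (1 <= i <= m)%nat -> P i d.
Proof.
  intros Hmono. induction m; intros H.
  - exists 1. split. lra. intros; lia.
  - destruct IHm as [d1 [Hd1 H1]]. intros; apply H; lia.
    destruct (H (S m)) as [d2 [Hd2 H2]]. lia.
    exists (Rmin d1 d2). split. apply Rmin_pos; auto.
    intros i Hi. destruct (Nat.eq_dec i (S m)) as [->|Hne].
    + apply (Hmono _ d2); auto. split. apply Rmin_pos; auto. apply Rmin_r.
    + apply (Hmono _ d1); auto. split. apply Rmin_pos; auto. apply Rmin_l. apply H1. lia.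
Qed.

Section FlowAtOrigin.
Variables (n : nat) (Hn : (2 <= n)%nat) (a : nat -> nat -> R) (T : R) (HT : 0 < T)
  (V : (nat -> R) -> Prop) (HV : open_nbhd0 n V) (g ginv : (nat -> R) -> nat -> nat -> R)
  (Hflow : ricci_flow n (domain T V) g ginv)
  (Hinit : forall y, domain T V y -> y 0%nat = 0 ->
     forall i j, (1 <= i <= n)%nat -> (1 <= j <= n)%nat ->
     g y i j = graph_metric n a y i j).

(* The bound [1/(4n)] on [g - id] makes [ginv] uniformly bounded on the box,
   which is what the derivative-of-the-inverse formula needs. *)
Lemma exists_good_radius : exists r, 0 < r /\ r <= T /\
  (forall z, (forall k, (1 <= k <= n)%nat -> Rabs (z k) < r) -> V z) /\
  (forall z, Box n r z -> forall i j, (1 <= i <= n)%nat -> (1 <= j <= n)%nat ->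
     Rabs (g z i j - kdelta i j) <= / (4 * INR n)).
Proof.
  pose proof HV as [HV0 [_ HVop]].
  destruct (HVop origin HV0) as [r0 [Hr0 Hr0V]].
  assert (HnR : 0 < INR n) by (apply lt_0_INR; lia).
  set (eps := / (4 * INR n)).
  assert (Heps : 0 < eps) by (unfold eps; apply Rinv_0_lt_compat; lra).
  assert (Uo : domain T V origin) by (split; [unfold origin; lra|auto]).
  assert (Hg0 : forall i j, (1 <= i <= n)%nat -> (1 <= j <= n)%nat -> g origin i j = kdelta i j).
  { intros i j Hi Hj. rewrite Hinit; auto. rewrite graph_metric_eq, !df_origin by auto. ring. }
  assert (Hcont : exists d, 0 < d /\ forall i, (1 <= i <= n)%nat -> forall j, (1 <= j <= n)%nat ->
     forall z, domain T V z -> (forall k, (k <= n)%nat -> Rabs (z k - origin k) < d) ->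
     Rabs (g z i j - g origin i j) < eps).
  { apply uniform_delta.
    - intros i d d' Hd H j Hj z Uz Hz. apply H; auto. intros k Hk. specialize (Hz k Hk). lra.
    - intros i Hi. apply uniform_delta.
      + intros j d d' Hd H z Uz Hz. apply H; auto. intros k Hk. specialize (Hz k Hk). lra.
      + intros j Hj. apply (proj1 (g_smooth_on n T V g ginv Hflow i j Hi Hj nil (fun m H => False_ind _ H))); auto. }
  destruct Hcont as [d [Hd Hcd]].
  exists (Rmin (Rmin r0 T) d).
  pose proof (Rmin_l (Rmin r0 T) d). pose proof (Rmin_r (Rmin r0 T) d).
  pose proof (Rmin_l r0 T). pose proof (Rmin_r r0 T).
  assert (HrV : forall z, (forall k, (1 <= k <= n)%nat -> Rabs (z k) < Rmin (Rmin r0 T) d) -> V z).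
  { intros z Hz. apply Hr0V. intros k Hk. unfold origin. rewrite Rminus_0_r. specialize (Hz k Hk). lra. }
  split; [repeat apply Rmin_pos; auto|]. split; [lra|]. split; [exact HrV|].
  intros z [Bz0 Bz] i j Hi Hj. rewrite <- Hg0 by auto. left. apply Hcd; auto.
  - split; [lra|]. apply HrV. auto.
  - intros k Hk. unfold origin. rewrite Rminus_0_r. destruct k.
    + rewrite Rabs_right; lra.
    + specialize (Bz (S k) ltac:(lia)). lra.
Qed.

Lemma Rm_origin_vanishes i j k l : (1 <= i <= n)%nat -> (1 <= j <= n)%nat ->
  (1 <= k <= n)%nat -> (1 <= l <= n)%nat -> Rm n (domain T V) g ginv origin i j k l = 0.
Proof.
  destruct exists_good_radius as [r [Hr [HrT [HrV Hrg]]]].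
  apply (Rm_origin n Hn a T V g ginv Hflow Hinit r Hr HrT HrV Hrg).
Qed.

Lemma has_pd_t_Rm_origin i j k l : (1 <= i <= n)%nat -> (1 <= j <= n)%nat ->
  (1 <= k <= n)%nat -> (1 <= l <= n)%nat ->
  has_pd (domain T V) (fun z => Rm n (domain T V) g ginv z i j k l) 0 origin (dtRm_val n a i j k l).
Proof.
  destruct exists_good_radius as [r [Hr [HrT [HrV Hrg]]]].
  apply (dt_Rm_origin n Hn a T V HV g ginv Hflow Hinit r Hr HrT HrV Hrg).
Qed.
End FlowAtOrigin.

Theorem mainTheorem1 (n : nat) (Hn : (2 <= n)%nat) (a : nat -> nat -> R)
  (T : R) (HT : 0 < T) (V : (nat -> R) -> Prop) (HV : open_nbhd0 n V)
  (g ginv : (nat -> R) -> nat -> nat -> R)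
  (Hflow : ricci_flow n (domain T V) g ginv)
  (Hinit : forall y, domain T V y -> y 0%nat = 0 ->
     forall i j, (1 <= i <= n)%nat -> (1 <= j <= n)%nat ->
     g y i j = graph_metric n a y i j) :
  let U := domain T V in
  let Rmt := fun i j k l => (fun z => Rm n U g ginv z i j k l) in
  (forall i j k l, (1 <= i <= n)%nat -> (1 <= j <= n)%nat ->
     (1 <= k <= n)%nat -> (1 <= l <= n)%nat ->
     Rm n U g ginv origin i j k l = 0) /\
  (forall i j k l, (1 <= i)%nat -> (i < j)%nat -> (j <= n)%nat ->
     (1 <= k)%nat -> (k < l)%nat -> (l <= n)%nat -> (i <= k)%nat ->
     (i <> k -> i <> l -> j <> k -> j <> l ->
        has_pd U (Rmt i j k l) 0%nat origin 0) /\
     (i < k -> k = j -> j < l ->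
        has_pd U (Rmt i j k l) 0%nat origin
          (8 * (a i l * a l j + a l i * a i j) - 8 * (a i j * a l j)))%nat /\
     (i < k -> k < l -> l = j ->
        has_pd U (Rmt i j k l) 0%nat origin
          (8 * (a i j * a k j) - 8 * (a i k * a k j + a k i * a i j)))%nat /\
     (i = k -> j <> l ->
        has_pd U (Rmt i j k l) 0%nat origin
          (8 * (a l i * a j i) - 8 * (a j l * a l i + a l j * a j i))) /\
     (i = k -> j = l ->
        has_pd U (Rmt i j k l) 0%nat origin
          (8 * (a i j ^ 2 + a j i ^ 2)
           - 8 * (sum1 n (fun q => if (Nat.eqb q i || Nat.eqb q j)%bool then 0
                                   else a q i * a q j)
                  + 3 * a i i * a i j + 3 * a j j * a j i)))) /\
  ((forall al be ga, (1 <= al <= n)%nat -> (1 <= be <= n)%nat ->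
      (1 <= ga <= n)%nat -> al <> be -> be <> ga -> al <> ga ->
      a al be * a be ga + a be al * a al ga = a al ga * a be ga) ->
   forall i j k l, (1 <= i <= n)%nat -> (1 <= j <= n)%nat ->
     (1 <= k <= n)%nat -> (1 <= l <= n)%nat ->
     ~ (i = k /\ j = l) -> ~ (i = l /\ j = k) ->
     has_pd U (Rmt i j k l) 0%nat origin 0).
Proof.
  intros U Rmt.
  assert (DT : forall i j k l v, (1 <= i <= n)%nat -> (1 <= j <= n)%nat ->
     (1 <= k <= n)%nat -> (1 <= l <= n)%nat -> dtRm_val n a i j k l = v ->
     has_pd U (Rmt i j k l) 0%nat origin v).
  { intros i j k l v Hi Hj Hk Hl <-. apply (has_pd_t_Rm_origin n Hn a T HT V HV g ginv Hflow Hinit); auto. }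
  split; [|split].
  - apply (Rm_origin_vanishes n Hn a T HT V HV g ginv Hflow Hinit).
  - intros i j k l Hi Hij Hj Hk Hkl Hl Hik.
    split; [|split; [|split; [|split]]]; intros; subst; apply DT; try lia.
    + apply dtRm_distinct; lia.
    + apply dtRm_kj; lia.
    + apply dtRm_lj; lia.
    + apply dtRm_ki; lia.
    + apply dtRm_diag; lia.
  - intros Hc i j k l Hi Hj Hk Hl H1 H2. apply DT; auto. apply dtRm_off_diagonal; auto.
Qed.
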